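(* Consider momentum gradient flow on a 2-layer diagonal linear network as described in the context, and assume that the trajectory $(u_t,v_t)_{t\ge0}$ is bounded and that the asymptotic balancedness $\Delta_\infty=\lim_{t\to\infty}\Delta_t$ has all coordinates nonzero. Then, for every coordinate $k\in[d]$, the quantities $$\Omega_\pm(k)=\int_0^\infty \mathrm{m.p.v.}\int_0^t\Big(\frac{\dot w_{\pm,s}(k)}{w_{\pm,s}(k)}\Big)^2 e^{-\frac{t-s}{\lambda}}\,\mathrm{sgn}\big(w_{\pm,t}(k)\,w_{\pm,s}(k)\big)\,\mathrm{d}s\,\mathrm{d}t$$ are well-defined and finite.
   Context: Data: $x_1,\dots,x_n\in\mathbb{R}^d$, $y\in\mathbb{R}^n$, loss $L(\theta)=\frac{1}{2n}\sum_{i=1}^n(y_i-\langle x_i,\theta\rangle)^2$. All vector operations (products, powers, $|\cdot|$, $\exp$, $\mathrm{sgn}$, inequalities) are coordinate-wise; $z(k)$ is the $k$-th coordinate. Fix $\lambda>0$. Momentum gradient flow on the diagonal linear network is the solution $(u_t,v_t)$ of $\lambda\ddot u_t+\dot u_t+\nabla L(\theta_t)\odot v_t=0$, $\lambda\ddot v_t+\dot v_t+\nabla L(\theta_t)\odot u_t=0$, $\theta_t=u_t\odot v_t$, with $\dot u_0=\dot v_0=0$ and $(u_0,v_0)$ such that $|u_0^2-v_0^2|$ has all coordinates nonzero. Set $w_{\pm,t}=u_t\pm v_t$ and balancedness $\Delta_t=|u_t^2-v_t^2|$. Under the hypotheses, each coordinate of $w_{\pm,t}$ vanishes at only finitely many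 times, so the integrands above have finitely many poles. Modified principal value: for a scalar function $f$ on $[0,\infty)$ continuous except at finitely many poles, for a pole $T$ and $\epsilon>0$ small enough that $T$ is the only pole in $(T-\epsilon,T+\epsilon)$, $\mathrm{m.p.v.}\int_{T-\epsilon}^{T+\epsilon}f=\lim_{\delta\to0}\big[e^{\delta/\lambda}\int_{T-\epsilon}^{T-\delta}f+e^{-\delta/\lambda}\int_{T+\delta}^{T+\epsilon}f\big]$; for $\tau$ not a pole, $\mathrm{m.p.v.}\int_0^\tau f$ is the sum of these m.p.v.'s over small neighbourhoods of the poles in $(0,\tau)$ plus the ordinary integrals of $f$ over the remaining pieces of $[0,\tau]$ (so it equals the ordinary integral when there are no poles). *)

From Stdlib Require Import Reals Lra Lia List Sorting.Sorted.
From Coquelicot Require Import Coquelicot.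
Open Scope R_scope.

Fixpoint sumR (m : nat) (f : nat -> R) : R :=
  match m with
  | O => 0
  | S m' => sumR m' f + f m'
  end.

(* Gradient of L(theta) = 1/(2n) sum_i (y_i - <x_i,theta>)^2, coordinate k.
   Data: x i j = j-th coordinate of x_i (i < n, j < d), y i = y_i. *)
Definition gradL (n d : nat) (x : nat -> nat -> R) (y : nat -> R)
  (theta : nat -> R) (k : nat) : R :=
  - (1 / INR n) * sumR n (fun i => (y i - sumR d (fun j => x i j * theta j)) * x i k).

Definition sgn (r : R) : R :=
  if Rlt_dec 0 r then 1 else if Rlt_dec r 0 then -1 else 0.

(* m.p.v. contribution of a pole T on (T-eps, T+eps):
   lim_{delta -> 0+} [e^{delta/lam} int_{T-eps}^{T-delta} f
                      + e^{-delta/lam} int_{T+delta}^{T+eps} f] = l *)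
Definition pole_lim (lam : R) (f : R -> R) (T eps l : R) : Prop :=
  (forall delta, 0 < delta < eps ->
     ex_RInt f (T - eps) (T - delta) /\ ex_RInt f (T + delta) (T + eps)) /\
  filterlim (fun delta => exp (delta / lam) * RInt f (T - eps) (T - delta)
                          + exp (- delta / lam) * RInt f (T + delta) (T + eps))
            (at_right 0) (locally l).

Fixpoint pole_sep (a : R) (P : list R) (b eps : R) : Prop :=
  match P with
  | nil => a <= b
  | p :: P' => a <= p - eps /\ pole_sep (p + eps) P' b eps
  end.

Fixpoint mpv_pieces (lam : R) (f : R -> R) (a : R) (P : list R) (b eps l : R)
  : Prop :=
  match P with
  | nil => is_RInt f a b l
  | p :: P' => exists l1 l2 l3,
      is_RInt f a (p - eps) l1 /\ pole_lim lam f p eps l2 /\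
      mpv_pieces lam f (p + eps) P' b eps l3 /\ l = l1 + l2 + l3
  end.

(* m.p.v. int_a^b f = l, where the poles of f are the points s with Zs s;
   the poles in (a,b) are finitely many, listed increasingly in P. *)
Definition is_mpv (lam : R) (f : R -> R) (Zs : R -> Prop) (a b l : R) : Prop :=
  exists P : list R,
    Sorted Rlt P /\ (forall s, In s P <-> (a < s < b /\ Zs s)) /\
    exists eps0, 0 < eps0 /\
      forall eps, 0 < eps < eps0 ->
        pole_sep a P b eps /\ mpv_pieces lam f a P b eps l.

Definition omega_integrand (lam : R) (w dw : R -> R) (t : R) : R -> R :=
  fun s => (dw s / w s) ^ 2 * exp (- (t - s) / lam) * sgn (w t * w s).

(* Omega = int_0^oo m.p.v. int_0^t (...) ds dt is well-defined and finite:
   w has finitely many zeros on [0,oo); for each non-pole t the inner m.p.v.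
   exists (value I t); the outer integral, taken as lim_{tau->oo} of the
   m.p.v. int_0^tau I, exists and is a real number Omega. *)
Definition Omega_well_defined_finite (lam : R) (w dw : R -> R) : Prop :=
  (exists Z : list R, forall t, 0 <= t -> (w t = 0 <-> In t Z)) /\
  exists I : R -> R,
    (forall t, 0 <= t -> w t <> 0 ->
       is_mpv lam (omega_integrand lam w dw t) (fun s => w s = 0) 0 t (I t)) /\
    exists J : R -> R,
      (forall tau, 0 <= tau -> w tau <> 0 ->
         is_mpv lam I (fun s => w s = 0) 0 tau (J tau)) /\
      exists Omega : R, filterlim J (Rbar_locally p_infty) (locally Omega).

From Stdlib Require Import Reals Lra Psatz List Sorting.Sorted Classical_Prop ClassicalEpsilon FunctionalExtensionality.
From Coquelicot Require Import Coquelicot.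
Open Scope R_scope.

(* Write [w = u_k + sigma v_k]: it solves the damped scalar equation
   [lam w'' + w' + q w = 0] with [q] continuous, so its zeros are simple and isolated, and
   [|u_k^2 - v_k^2| = |w| |u_k - sigma v_k|] (nonzero limit, bounded second factor) keeps [w] away
   from [0] for large times, so there are finitely many zeros.
   Since [e^{-(t-s)/lam} = e^{-t/lam} e^{s/lam}], the inner integrand is explicit to integrate between
   zeros, with antiderivative [Phi = - (w'/w) e^{s/lam} - int_0^s q e^{r/lam} / lam].  At a zero,
   [w'/w] has simple poles with opposite residues on the two sides, and the weights [e^{+-d/lam}]
   of the modified principal value make them cancel exactly.  The outer integrand is again explicit
   near a zero, with singular part [- (1/2) ln w^2], which the same weights tame.  For large [t] the
   outer integrand is [a e^{-t/lam}] plus a nonnegative term whose integral is controlled by the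
   energy [L + (lam/2) |(u', v')|^2], which decreases at rate [|(u', v')|^2 >= w'^2 / 2]. *)

Lemma ball_R (x e y : R) : ball x e y <-> Rabs (y - x) < e.
Proof. reflexivity. Qed.

Lemma locally_R (P : R -> Prop) x r :
  0 < r -> (forall y, Rabs (y - x) < r -> P y) -> locally x P.
Proof. intros Hr H. exists (mkposreal r Hr). exact H. Qed.

Lemma at_right0_R (P : R -> Prop) r :
  0 < r -> (forall d, 0 < d < r -> P d) -> at_right 0 P.
Proof.
  intros Hr H. exists (mkposreal r Hr). intros d Hd Hpos. apply H.
  change (Rabs (d - 0) < r) in Hd. apply Rabs_lt_between in Hd. lra.
Qed.

Lemma is_derive_continuous (f : R -> R) (x l : R) : is_derive f x l -> continuous f x.
Proof. intros H. apply (@ex_derive_continuous R_AbsRing R_NormedModule). exists l; exact H. Qed.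

Lemma is_derive_value (f : R -> R) (x a b : R) : a = b -> is_derive f x a -> is_derive f x b.
Proof. now intros ->. Qed.

Lemma is_derive_Rext (f g : R -> R) (x a : R) : (forall t, f t = g t) -> is_derive f x a -> is_derive g x a.
Proof. intros E H. now apply (is_derive_ext f g). Qed.

Lemma is_derive_Rconst (c x : R) : is_derive (fun _ => c) x 0.
Proof. exact (is_derive_const c x). Qed.

Lemma is_derive_Rid (x : R) : is_derive (fun t => t) x 1.
Proof. exact (is_derive_id x). Qed.

Lemma is_derive_Rplus (f g : R -> R) (x a b : R) :
  is_derive f x a -> is_derive g x b -> is_derive (fun t => f t + g t) x (a + b).
Proof. exact (is_derive_plus f g x a b). Qed.

Lemma is_derive_Rminus (f g : R -> R) (x a b : R) :
  is_derive f x a -> is_derive g x b -> is_derive (fun t => f t - g t) x (a - b).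
Proof. exact (is_derive_minus f g x a b). Qed.

Lemma is_derive_Ropp (f : R -> R) (x a : R) : is_derive f x a -> is_derive (fun t => - f t) x (- a).
Proof. exact (is_derive_opp f x a). Qed.

Lemma is_derive_Rmult (f g : R -> R) (x a b : R) :
  is_derive f x a -> is_derive g x b -> is_derive (fun t => f t * g t) x (a * g x + f x * b).
Proof. intros. apply (is_derive_mult f g x a b); auto. intros; apply Rmult_comm. Qed.

Lemma is_derive_Rscal (f : R -> R) (x k a : R) : is_derive f x a -> is_derive (fun t => k * f t) x (k * a).
Proof. exact (is_derive_scal f x k a). Qed.

Lemma is_derive_Rexp (f : R -> R) (x a : R) : is_derive f x a -> is_derive (fun t => exp (f t)) x (a * exp (f x)).
Proof. intros H. apply (is_derive_comp exp f x (exp (f x)) a); auto. apply is_derive_exp. Qed.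

Lemma is_derive_Rln (f : R -> R) (x a : R) : is_derive f x a -> 0 < f x -> is_derive (fun t => ln (f t)) x (a / f x).
Proof. intros H Hp. apply (is_derive_comp ln f x (/ f x) a); auto. now apply is_derive_ln. Qed.

Lemma is_derive_exp_div (lam s : R) : is_derive (fun t => exp (t / lam)) s (exp (s / lam) / lam).
Proof.
  replace (s / lam) with (/ lam * s) by (unfold Rdiv; ring).
  apply (is_derive_Rext (fun t => exp (/ lam * t))); [intros t; f_equal; unfold Rdiv; ring|].
  eapply is_derive_value; [|apply is_derive_Rexp, is_derive_Rscal, is_derive_Rid].
  unfold Rdiv; ring.
Qed.

Lemma is_derive_exp_neg_div (lam s : R) : is_derive (fun t => exp (- t / lam)) s (- exp (- s / lam) / lam).
Proof.
  replace (- s / lam) with (- / lam * s) by (unfold Rdiv; ring).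
  apply (is_derive_Rext (fun t => exp (- / lam * t))); [intros t; f_equal; unfold Rdiv; ring|].
  eapply is_derive_value; [|apply is_derive_Rexp, is_derive_Rscal, is_derive_Rid].
  unfold Rdiv; ring.
Qed.

Lemma is_derive_shift (f : R -> R) (x0 d l : R) : is_derive f (x0 + d) l -> is_derive (fun s => f (x0 + s)) d l.
Proof.
  intros H. eapply is_derive_value; [|apply (is_derive_comp f (fun s => x0 + s) d l 1); auto].
  - unfold scal; simpl; unfold mult; simpl. ring.
  - eapply is_derive_value; [|apply is_derive_Rplus; [apply is_derive_Rconst|apply is_derive_Rid]]. ring.
Qed.

Lemma is_derive_shift_neg (f : R -> R) (x0 d l : R) : is_derive f (x0 - d) l -> is_derive (fun s => f (x0 - s)) d (- l).
Proof.
  intros H. eapply is_derive_value; [|apply (is_derive_comp f (fun s => x0 - s) d l (-1)); auto].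
  - unfold scal; simpl; unfold mult; simpl. ring.
  - eapply is_derive_value; [|apply is_derive_Rminus; [apply is_derive_Rconst|apply is_derive_Rid]]. ring.
Qed.

Lemma continuous_Rplus (f g : R -> R) (x : R) :
  continuous f x -> continuous g x -> continuous (fun t => f t + g t) x.
Proof. exact (continuous_plus f g x). Qed.

Lemma continuous_Rmult (f g : R -> R) (x : R) :
  continuous f x -> continuous g x -> continuous (fun t => f t * g t) x.
Proof. exact (continuous_mult f g x). Qed.

Lemma continuous_Ropp (f : R -> R) (x : R) : continuous f x -> continuous (fun t => - f t) x.
Proof. exact (continuous_opp f x). Qed.

Lemma continuous_Rminus (f g : R -> R) (x : R) :
  continuous f x -> continuous g x -> continuous (fun t => f t - g t) x.
Proof. intros. now apply continuous_Rplus, continuous_Ropp. Qed.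

Lemma continuous_Rdiv (f g : R -> R) (x : R) :
  continuous f x -> continuous g x -> g x <> 0 -> continuous (fun t => f t / g t) x.
Proof. intros. now apply continuous_Rmult, continuous_Rinv_comp. Qed.

Lemma continuous_exp_div (lam s : R) : continuous (fun t => exp (t / lam)) s.
Proof. apply continuous_exp_comp, continuous_Rmult; [apply continuous_id|apply continuous_const]. Qed.

Lemma continuous_exp_neg_div (lam s : R) : continuous (fun t => exp (- t / lam)) s.
Proof.
  apply continuous_exp_comp, continuous_Rmult; [apply continuous_Ropp, continuous_id|apply continuous_const].
Qed.

Lemma continuous_eps_delta (f : R -> R) (x : R) : continuous f x -> forall eps, 0 < eps ->
  exists eta, 0 < eta /\ forall y, Rabs (y - x) < eta -> Rabs (f y - f x) < eps.
Proof.
  intros H eps He. destruct (proj1 (filterlim_locally f (f x)) H (mkposreal eps He)) as [[eta Heta] Hy].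
  exists eta. split; auto.
Qed.

Lemma continuous_nonzero_nbhd (f : R -> R) (x : R) : continuous f x -> f x <> 0 ->
  exists eta, 0 < eta /\ forall y, Rabs (y - x) < eta -> f y <> 0.
Proof.
  intros Hc Hn. destruct (continuous_eps_delta f x Hc (Rabs (f x)) (Rabs_pos_lt _ Hn)) as [eta [He H]].
  exists eta. split; auto. intros y Hy E. specialize (H y Hy). rewrite E, Rminus_0_l, Rabs_Ropp in H. lra.
Qed.

Lemma continuity_pt_continuous (f : R -> R) (x : R) : continuous f x -> continuity_pt f x.
Proof. intros H. now apply continuity_pt_filterlim. Qed.

Section FilterArithmetic.
Context {T : Type} {F : (T -> Prop) -> Prop} {FF : Filter F}.

Lemma filterlim_Rplus (f g : T -> R) (a b : R) :
  filterlim f F (locally a) -> filterlim g F (locally b) ->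
  filterlim (fun x => f x + g x) F (locally (a + b)).
Proof. intros Hf Hg. exact (filterlim_comp_2 f g Rplus Hf Hg (filterlim_plus a b)). Qed.

Lemma filterlim_Rmult (f g : T -> R) (a b : R) :
  filterlim f F (locally a) -> filterlim g F (locally b) ->
  filterlim (fun x => f x * g x) F (locally (a * b)).
Proof. intros Hf Hg. exact (filterlim_comp_2 f g Rmult Hf Hg (filterlim_mult a b)). Qed.

Lemma filterlim_Ropp (f : T -> R) (a : R) :
  filterlim f F (locally a) -> filterlim (fun x => - f x) F (locally (- a)).
Proof. intros H. exact (filterlim_comp _ _ _ f Ropp F (locally a) (locally (- a)) H (filterlim_opp a)). Qed.

Lemma filterlim_Rminus (f g : T -> R) (a b : R) :
  filterlim f F (locally a) -> filterlim g F (locally b) ->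
  filterlim (fun x => f x - g x) F (locally (a - b)).
Proof. intros. now apply filterlim_Rplus, filterlim_Ropp. Qed.

Lemma filterlim_continuous (f : T -> R) (g : R -> R) (a : R) :
  filterlim f F (locally a) -> continuous g a -> filterlim (fun x => g (f x)) F (locally (g a)).
Proof. intros Hf Hg. exact (filterlim_comp _ _ _ f g F (locally a) (locally (g a)) Hf Hg). Qed.

End FilterArithmetic.

Notation lim_right0 f l := (filterlim f (at_right 0) (locally l)).

Lemma lim_right0_ext (f g : R -> R) (l r : R) : 0 < r ->
  (forall d, 0 < d < r -> f d = g d) -> lim_right0 f l -> lim_right0 g l.
Proof. intros Hr E. apply filterlim_ext_loc. exact (at_right0_R _ r Hr E). Qed.

Lemma lim_right0_unique (f : R -> R) (a b : R) : lim_right0 f a -> lim_right0 f b -> a = b.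
Proof.
  intros Ha Hb. exact (@filterlim_locally_unique R R_AbsRing R_NormedModule (at_right 0)
    (Proper_StrongProper _ (at_right_proper_filter 0)) f a b Ha Hb).
Qed.

Lemma lim_right0_eps_delta (f : R -> R) (l : R) : lim_right0 f l <->
  (forall eps, 0 < eps -> exists eta, 0 < eta /\ forall d, 0 < d < eta -> Rabs (f d - l) < eps).
Proof.
  split.
  - intros H eps Heps.
    destruct (proj1 (filterlim_locally f l) H (mkposreal eps Heps)) as [[eta Heta] He].
    exists eta. split; auto. intros d Hd. apply He; [|apply Hd].
    apply ball_R. rewrite Rminus_0_r, Rabs_right; simpl; lra.
  - intros H. apply (proj2 (filterlim_locally f l)). intros [eps Heps].
    destruct (H eps Heps) as [eta [Heta He]].
    apply (at_right0_R _ eta Heta). intros d Hd. apply He, Hd.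
Qed.

Lemma lim_right0_continuous (g : R -> R) : continuous g 0 -> lim_right0 g (g 0).
Proof. intros Hg P HP. destruct (Hg P HP) as [e He]. exists e. intros d Hd _. now apply He. Qed.

Lemma lim_right0_shift (g : R -> R) (x0 : R) : continuous g x0 -> lim_right0 (fun d => g (x0 + d)) (g x0).
Proof.
  intros Hg. replace (g x0) with (g (x0 + 0)) by now rewrite Rplus_0_r. apply (lim_right0_continuous (fun d => g (x0 + d))).
  apply (continuous_comp (fun d => x0 + d) g). 
  - apply continuous_Rplus; [apply continuous_const|apply continuous_id].
  - now rewrite Rplus_0_r.
Qed.

Lemma lim_right0_shift_neg (g : R -> R) (x0 : R) : continuous g x0 -> lim_right0 (fun d => g (x0 - d)) (g x0).
Proof.
  intros Hg. replace (g x0) with (g (x0 - 0)) by now rewrite Rminus_0_r. apply (lim_right0_continuous (fun d => g (x0 - d))).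
  apply (continuous_comp (fun d => x0 - d) g).
  - apply continuous_Rminus; [apply continuous_const|apply continuous_id].
  - now rewrite Rminus_0_r.
Qed.

Lemma lim_right0_exp_div (lam : R) : lim_right0 (fun d => exp (d / lam)) 1.
Proof.
  replace 1 with (exp (0 / lam)) by (unfold Rdiv; now rewrite Rmult_0_l, exp_0).
  apply (lim_right0_continuous (fun d => exp (d / lam))), continuous_exp_div.
Qed.

Lemma lim_right0_exp_neg_div (lam : R) : lim_right0 (fun d => exp (- d / lam)) 1.
Proof.
  replace 1 with (exp (- 0 / lam)) by (unfold Rdiv; now rewrite Ropp_0, Rmult_0_l, exp_0).
  apply (lim_right0_continuous (fun d => exp (- d / lam))), continuous_exp_neg_div.
Qed.

Lemma lim_right0_xlnx : lim_right0 (fun d => d * ln d) 0.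
Proof.
  apply (lim_right0_ext (fun d => ln d * exp (ln d)) _ _ 1); [lra| |].
  - intros d Hd. rewrite exp_ln by lra. ring.
  - exact (filterlim_comp _ _ _ ln (fun y => y * exp y) _ _ _ is_lim_ln_0 is_lim_mul_exp_m).
Qed.

Lemma lim_right0_diff_quot (f : R -> R) (x l : R) :
  is_derive f x l -> lim_right0 (fun d => (f (x + d) - f x) / d) l.
Proof.
  intros H. apply is_derive_Reals in H. apply lim_right0_eps_delta. intros eps He.
  destruct (H eps He) as [[e He'] Hd]. exists e. split; auto. intros d Hd'.
  apply Hd; [lra|]. simpl. rewrite Rabs_right; lra.
Qed.

Lemma lim_right0_diff_quot_neg (f : R -> R) (x l : R) :
  is_derive f x l -> lim_right0 (fun d => (f (x - d) - f x) / d) (- l).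
Proof.
  intros H. apply is_derive_Reals in H. apply lim_right0_eps_delta. intros eps He.
  destruct (H eps He) as [[e He'] Hd]. exists e. split; auto. intros d Hd'.
  specialize (Hd (- d) ltac:(lra)). simpl in Hd. rewrite Rabs_Ropp, Rabs_right in Hd by lra.
  specialize (Hd ltac:(lra)). replace (x + - d) with (x - d) in Hd by ring.
  replace ((f (x - d) - f x) / d - - l) with (- ((f (x - d) - f x) / - d - l)) by (field; lra).
  now rewrite Rabs_Ropp.
Qed.

Lemma MVT_le (f df : R -> R) (a b : R) : a <= b ->
  (forall t, a <= t <= b -> is_derive f t (df t)) ->
  exists c, a <= c <= b /\ f b - f a = df c * (b - a).
Proof.
  intros Hab H. destruct (MVT_gen f a b df) as [c [Hc E]].
  - intros t Ht. rewrite Rmin_left, Rmax_right in Ht by lra. apply H; lra.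
  - intros t Ht. rewrite Rmin_left, Rmax_right in Ht by lra.
    apply continuity_pt_continuous, (is_derive_continuous _ _ (df t)), H; lra.
  - rewrite Rmin_left, Rmax_right in Hc by lra. now exists c.
Qed.

Lemma lim_right0_div_sqr (phi psi : R -> R) (r c : R) : 0 < r ->
  (forall d, 0 <= d < r -> continuous phi d) ->
  (forall d, 0 < d < r -> is_derive phi d (d * psi d)) ->
  phi 0 = 0 -> lim_right0 psi c -> lim_right0 (fun d => phi d / d ^ 2) (c / 2).
Proof.
  intros Hr Hc Hd H0 Hpsi. rewrite lim_right0_eps_delta in Hpsi |- *. intros eps He.
  destruct (Hpsi (eps / 2) ltac:(lra)) as [e [He' Hp]].
  exists (Rmin e r). split; [now apply Rmin_pos|]. intros d [Hd0 Hd'].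
  assert (D1 : d < e) by (eapply Rlt_le_trans; [apply Hd'|apply Rmin_l]).
  assert (D2 : d < r) by (eapply Rlt_le_trans; [apply Hd'|apply Rmin_r]).
  destruct (MVT_gen (fun s => phi s - c / 2 * s ^ 2) 0 d (fun s => s * (psi s - c))) as [xi [Hxi E]].
  - intros s Hs. rewrite Rmin_left, Rmax_right in Hs by lra.
    eapply is_derive_value; [|apply is_derive_Rminus; [apply Hd; lra|apply (is_derive_Rscal (fun s => s ^ 2)), (is_derive_pow (fun s => s)), is_derive_Rid]].
    simpl; field.
  - intros s Hs. rewrite Rmin_left, Rmax_right in Hs by lra. apply continuity_pt_continuous.
    apply continuous_Rminus; [apply Hc; lra|].
    apply continuous_Rmult; [apply continuous_const|].
    apply (continuous_ext (fun s => s * s)); [intros; simpl; ring|].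
    apply continuous_Rmult; apply continuous_id.
  - rewrite Rmin_left, Rmax_right in Hxi by lra. rewrite H0 in E.
    assert (B : Rabs (xi * (psi xi - c)) <= d * (eps / 2)).
    { destruct (Req_dec xi 0) as [->|Hx].
      - rewrite Rmult_0_l, Rabs_R0. apply Rmult_le_pos; lra.
      - rewrite Rabs_mult, Rabs_right by lra. apply Rmult_le_compat; try lra; [apply Rabs_pos|].
        left. apply Hp. lra. }
    replace (phi d / d ^ 2 - c / 2) with ((phi d - c / 2 * d ^ 2 - (0 - c / 2 * 0 ^ 2)) / d ^ 2) by (field; lra).
    rewrite E, Rminus_0_r, Rabs_div, Rabs_mult, (Rabs_right d), (Rabs_right (d ^ 2)) by (try apply Rle_ge, pow2_ge_0; nra).
    apply Rle_lt_trans with (d * (eps / 2) * d / d ^ 2).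
    + unfold Rdiv. apply Rmult_le_compat_r; [left; apply Rinv_0_lt_compat; nra|]. nra.
    + replace (d * (eps / 2) * d / d ^ 2) with (eps / 2) by (field; lra). lra.
Qed.

Lemma lim_right0_log_derivative (f df ddf : R -> R) (r : R) : 0 < r -> f 0 = 0 -> df 0 <> 0 ->
  (forall d, 0 <= d < r -> is_derive f d (df d)) -> (forall d, 0 <= d < r -> is_derive df d (ddf d)) ->
  continuous ddf 0 -> (forall d, 0 < d < r -> f d <> 0) ->
  lim_right0 (fun d => df d / f d - / d) (ddf 0 / 2 * / df 0).
Proof.
  intros Hr Hf0 Hdf0 Hf Hdf Hddf Hfn.
  apply (lim_right0_ext (fun d => ((d * df d - f d) / d ^ 2) * / ((f (0 + d) - f 0) / d)) _ _ r Hr).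
  { intros d Hd. rewrite Hf0, Rplus_0_l. assert (f d <> 0) by (apply Hfn; lra). field. lra. }
  apply filterlim_Rmult.
  - apply (lim_right0_div_sqr (fun d => d * df d - f d) ddf r); [lra| | |now rewrite Hf0, Rmult_0_l, Rminus_0_r|].
    + intros d Hd. apply continuous_Rminus; [apply continuous_Rmult; [apply continuous_id|]|];
        eapply is_derive_continuous; [apply Hdf|apply Hf]; lra.
    + intros d Hd. eapply is_derive_value.
      2: apply is_derive_Rminus; [apply is_derive_Rmult; [apply is_derive_Rid|apply Hdf]|apply Hf]; lra.
      cbv beta. ring.
    + now apply lim_right0_continuous.
  - apply (filterlim_continuous _ Rinv); [apply lim_right0_diff_quot, Hf; lra|now apply continuous_Rinv].
Qed.

Lemma is_RInt_derive_le (F f : R -> R) (a b : R) : a <= b ->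
  (forall z, a <= z <= b -> is_derive F z (f z)) ->
  (forall z, a <= z <= b -> continuous f z) -> is_RInt f a b (F b - F a).
Proof.
  intros Hab HF Hf. apply (@is_RInt_derive R_CompleteNormedModule F f a b);
    intros z Hz; rewrite Rmin_left, Rmax_right in Hz by lra; auto.
Qed.

Lemma is_RInt_continuous_le (f : R -> R) (a b : R) : a <= b ->
  (forall z, a <= z <= b -> continuous f z) -> is_RInt f a b (RInt f a b).
Proof.
  intros Hab Hf. apply (@RInt_correct R_CompleteNormedModule), (@ex_RInt_continuous R_CompleteNormedModule).
  intros z Hz; rewrite Rmin_left, Rmax_right in Hz by lra; auto.
Qed.

Lemma is_RInt_Rscal (f : R -> R) (a b c l : R) : is_RInt f a b l -> is_RInt (fun s => c * f s) a b (c * l).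
Proof. exact (is_RInt_scal f a b c l). Qed.

Lemma is_derive_RInt_upper (f : R -> R) (a c s : R) : c < a -> c < s -> (forall z, c < z -> continuous f z) ->
  is_derive (fun y => RInt f a y) s (f s).
Proof.
  intros Ha Hs Hc. apply (is_derive_RInt f (fun y => RInt f a y) a s); [|apply Hc; lra].
  apply (locally_R _ s (s - c)); [lra|]. intros b Hb. apply Rabs_lt_between in Hb.
  apply (@RInt_correct R_CompleteNormedModule), (@ex_RInt_continuous R_CompleteNormedModule).
  intros z Hz. apply Hc. assert (c < Rmin a b) by (apply Rmin_glb_lt; lra). destruct Hz. lra.
Qed.

Lemma continuous_RInt_upper (f : R -> R) (a t eta : R) : 0 < eta ->
  (forall z, Rmin a (t - eta) <= z <= Rmax a (t + eta) -> continuous f z) ->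
  continuous (fun y => RInt f a y) t.
Proof.
  intros He Hc. eapply is_derive_continuous, (is_derive_RInt f (fun y => RInt f a y) a t).
  - apply (locally_R _ t eta He). intros b Hb. apply Rabs_lt_between in Hb.
    apply (@RInt_correct R_CompleteNormedModule), (@ex_RInt_continuous R_CompleteNormedModule).
    intros z Hz. apply Hc. split.
    + eapply Rle_trans; [|apply Hz]. apply Rmin_glb; [apply Rmin_l|]. eapply Rle_trans; [apply Rmin_r|lra].
    + eapply Rle_trans; [apply Hz|]. apply Rmax_lub; [apply Rmax_l|]. eapply Rle_trans; [|apply Rmax_r]. lra.
  - apply Hc. split; [eapply Rle_trans; [apply Rmin_r|lra]|eapply Rle_trans; [|apply Rmax_r]; lra].
Qed.

Lemma continuous_Rmax0 (z : R) : continuous (fun s => Rmax 0 s) z.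
Proof.
  apply (continuous_ext (fun s => (s + Rabs s) / 2)).
  - intros s. unfold Rmax, Rabs. destruct (Rle_dec 0 s), (Rcase_abs s); lra.
  - apply continuous_Rdiv; [apply continuous_Rplus; [apply continuous_id|apply continuous_Rabs]|apply continuous_const|lra].
Qed.

Lemma sqr_div_le (a b m S : R) : 0 < m <= Rabs b -> a ^ 2 <= S -> (a / b) ^ 2 <= S / m ^ 2.
Proof.
  intros Hm Ha. assert (Hb : b <> 0) by (intros ->; rewrite Rabs_R0 in Hm; lra).
  assert (Hm2 : 0 < m ^ 2) by (apply pow_lt; lra).
  assert (Hb2 : m ^ 2 <= b ^ 2) by (rewrite <- (pow2_abs b); apply pow_incr; lra).
  replace ((a / b) ^ 2) with (a ^ 2 / b ^ 2) by (field; auto).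
  apply Rle_trans with (a ^ 2 / m ^ 2); unfold Rdiv.
  - apply Rmult_le_compat_l; [apply pow2_ge_0|]. now apply Rinv_le_contravar.
  - apply Rmult_le_compat_r; [left; now apply Rinv_0_lt_compat|auto].
Qed.

Lemma sgn_pos (r : R) : 0 < r -> sgn r = 1.
Proof. intros H. unfold sgn. destruct (Rlt_dec 0 r); [auto|lra]. Qed.

Lemma sgn_neg (r : R) : r < 0 -> sgn r = -1.
Proof. intros H. unfold sgn. destruct (Rlt_dec 0 r); [lra|]. destruct (Rlt_dec r 0); [auto|lra]. Qed.

Lemma sgn_mult (r s : R) : sgn (r * s) = sgn r * sgn s.
Proof.
  destruct (Rtotal_order r 0) as [A|[A|A]]; destruct (Rtotal_order s 0) as [B|[B|B]];
    try (subst; rewrite ?Rmult_0_l, ?Rmult_0_r; unfold sgn; repeat destruct Rlt_dec; lra).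
  all: try (rewrite (sgn_pos (r * s)) by nra); try (rewrite (sgn_neg (r * s)) by nra);
    try (rewrite (sgn_pos r) by lra); try (rewrite (sgn_neg r) by lra);
    try (rewrite (sgn_pos s) by lra); try (rewrite (sgn_neg s) by lra); ring.
Qed.

Lemma sgn_sqr (r : R) : r <> 0 -> sgn r * sgn r = 1.
Proof.
  intros H. destruct (Rtotal_order r 0) as [A|[A|A]]; [rewrite sgn_neg; auto; ring|lra|].
  rewrite sgn_pos; auto; ring.
Qed.

Lemma continuous_sgn_comp (w : R -> R) (s : R) : continuous w s -> w s <> 0 -> continuous (fun t => sgn (w t)) s.
Proof.
  intros Hc Hn. apply (continuous_ext_loc _ (fun _ => sgn (w s))); [|apply continuous_const].
  destruct (continuous_eps_delta w s Hc (Rabs (w s)) (Rabs_pos_lt _ Hn)) as [eta [Heta He]].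
  apply (locally_R _ s eta Heta). intros y Hy. specialize (He y Hy). apply Rabs_lt_between in He.
  destruct (Rlt_or_le 0 (w s)) as [P|P].
  - rewrite Rabs_right in He by lra. rewrite !sgn_pos; auto; lra.
  - rewrite Rabs_left in He by lra. rewrite !sgn_neg; auto; lra.
Qed.

Lemma sgn_constant (w : R -> R) (a b : R) : a <= b -> (forall s, a <= s <= b -> continuous w s) ->
  (forall s, a <= s <= b -> w s <> 0) -> sgn (w b) = sgn (w a).
Proof.
  intros Hab Hc Hn. destruct (Rle_lt_or_eq_dec a b Hab) as [Lt|Eq]; [|subst; auto].
  assert (Wa := Hn a ltac:(lra)). assert (Wb := Hn b ltac:(lra)).
  destruct (Rtotal_order (w a) 0) as [A|[A|A]]; [|contradiction|];
  destruct (Rtotal_order (w b) 0) as [B|[B|B]]; try contradiction.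
  - now rewrite !sgn_neg.
  - exfalso. destruct (Ranalysis5.IVT_interv w a b) as [z [Hz Ez]]; auto.
    + intros s Hs. now apply continuity_pt_continuous, Hc.
    + now apply (Hn z).
  - exfalso. destruct (Ranalysis5.IVT_interv (fun s => - w s) a b) as [z [Hz Ez]]; auto; try lra.
    + intros s Hs. now apply continuity_pt_continuous, continuous_Ropp, Hc.
    + apply (Hn z); auto. lra.
  - now rewrite !sgn_pos.
Qed.

Lemma lim_pinfty_eps_delta (f : R -> R) (l : R) : is_lim f p_infty (Finite l) ->
  forall eps, 0 < eps -> exists M, forall t, M < t -> Rabs (f t - l) < eps.
Proof.
  intros H eps He. destruct (proj1 (filterlim_locally f l) H (mkposreal eps He)) as [M HM].
  exists M. exact HM.
Qed.

Lemma lim_pinfty_nondecreasing (f : R -> R) (T C : R) :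
  (forall a b, T <= a <= b -> f a <= f b) -> (forall a, T <= a -> f a <= C) ->
  exists L, filterlim f (Rbar_locally p_infty) (locally L).
Proof.
  intros Hm Hb.
  destruct (completeness (fun y => exists a, T <= a /\ y = f a)) as [L [HL1 HL2]].
  { exists C. intros y [a [Ha ->]]. now apply Hb. }
  { exists (f T), T. split; [lra|auto]. }
  exists L. apply (proj2 (filterlim_locally f L)). intros [eps He].
  assert (Ex : exists a, T <= a /\ L - eps < f a).
  { apply NNPP. intros NE.
    enough (L <= L - eps) by (simpl in *; lra). apply HL2. intros y [a [Ha ->]].
    destruct (Rle_or_lt (f a) (L - eps)); auto. exfalso; apply NE; now exists a. }
  destruct Ex as [a [Ha Hfa]]. exists a. intros x Hx. apply ball_R, Rabs_lt_between.
  assert (f a <= f x) by (apply Hm; lra). assert (f x <= L) by (apply HL1; exists x; split; auto; lra).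
  simpl. lra.
Qed.

Lemma lim_pinfty_exp_neg_div (lam : R) : 0 < lam ->
  filterlim (fun t => exp (- t / lam)) (Rbar_locally p_infty) (locally 0).
Proof.
  intros Hl. apply (proj2 (filterlim_locally _ 0)). intros [eps He]. simpl.
  exists (- lam * ln eps). intros x Hx. apply ball_R.
  rewrite Rminus_0_r, Rabs_right by (apply Rle_ge, Rlt_le, exp_pos).
  rewrite <- (exp_ln eps) by auto. apply exp_increasing.
  apply (Rmult_lt_reg_l lam); auto. replace (lam * (- x / lam)) with (- x) by (field; lra). lra.
Qed.

Definition mpv_regular_pole (lam : R) (f : R -> R) (p : R) : Prop :=
  exists rho FL FR K, 0 < rho /\
    (forall s, p - rho <= s < p -> is_derive FL s (f s)) /\
    (forall s, p < s <= p + rho -> is_derive FR s (f s)) /\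
    lim_right0 (fun d => exp (d / lam) * FL (p - d) - exp (- d / lam) * FR (p + d)) K.

Lemma pole_lim_antiderivatives (lam : R) (f FL FR : R -> R) (p r K eps : R) : 0 < eps <= r ->
  (forall s, p - r <= s < p -> is_derive FL s (f s)) ->
  (forall s, p < s <= p + r -> is_derive FR s (f s)) ->
  (forall z, p - r <= z <= p + r -> z <> p -> continuous f z) ->
  lim_right0 (fun d => exp (d / lam) * FL (p - d) - exp (- d / lam) * FR (p + d)) K ->
  pole_lim lam f p eps (K - FL (p - eps) + FR (p + eps)).
Proof.
  intros He HFL HFR Hc HK.
  assert (IL : forall d, 0 < d < eps -> is_RInt f (p - eps) (p - d) (FL (p - d) - FL (p - eps))).
  { intros d Hd. apply is_RInt_derive_le; [lra| |]; intros z Hz; [apply HFL|apply Hc]; lra. }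
  assert (IR : forall d, 0 < d < eps -> is_RInt f (p + d) (p + eps) (FR (p + eps) - FR (p + d))).
  { intros d Hd. apply is_RInt_derive_le; [lra| |]; intros z Hz; [apply HFR|apply Hc]; lra. }
  split.
  - intros d Hd. split; eexists; [apply IL|apply IR]; auto.
  - apply (lim_right0_ext (fun d => (exp (d / lam) * FL (p - d) - exp (- d / lam) * FR (p + d))
       - exp (d / lam) * FL (p - eps) + exp (- d / lam) * FR (p + eps)) _ _ eps); [lra| |].
    + intros d Hd. rewrite (is_RInt_unique _ _ _ _ (IL d Hd)), (is_RInt_unique _ _ _ _ (IR d Hd)). ring.
    + replace (K - FL (p - eps) + FR (p + eps)) with (K - 1 * FL (p - eps) + 1 * FR (p + eps)) by ring.
      apply filterlim_Rplus; [apply filterlim_Rminus; [exact HK|]|].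
      * apply filterlim_Rmult; [apply lim_right0_exp_div|apply filterlim_const].
      * apply filterlim_Rmult; [apply lim_right0_exp_neg_div|apply filterlim_const].
Qed.

Lemma pole_sep_le_l (a a' b eps : R) (P : list R) : pole_sep a P b eps -> a' <= a -> pole_sep a' P b eps.
Proof. destruct P; simpl; intros H Ha; [lra|]. destruct H; split; auto; lra. Qed.

Lemma pole_sep_le_r (a b b' eps : R) (P : list R) : pole_sep a P b eps -> b <= b' -> pole_sep a P b' eps.
Proof. revert a. induction P as [|p P IH]; simpl; intros a H Hb; [lra|]. destruct H; split; auto. Qed.

Lemma mpv_pieces_Chasles_l (lam : R) (f : R -> R) (a0 a b eps l r : R) (P : list R) :
  is_RInt f a0 a r -> mpv_pieces lam f a P b eps l -> mpv_pieces lam f a0 P b eps (r + l).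
Proof.
  destruct P as [|p P]; simpl; intros Hr H.
  - exact (is_RInt_Chasles f a0 a b r l Hr H).
  - destruct H as [l1 [l2 [l3 [H1 [H2 [H3 ->]]]]]].
    exists (r + l1), l2, l3. split; [exact (is_RInt_Chasles f a0 a (p - eps) r l1 Hr H1)|].
    split; [exact H2|]. split; [exact H3|ring].
Qed.

Lemma mpv_pieces_Chasles_r (lam : R) (f : R -> R) (P : list R) : forall (a b b' eps l r : R),
  mpv_pieces lam f a P b eps l -> is_RInt f b b' r -> mpv_pieces lam f a P b' eps (l + r).
Proof.
  induction P as [|p P IH]; simpl; intros a b b' eps l r H Hr.
  - exact (is_RInt_Chasles f a b b' l r H Hr).
  - destruct H as [l1 [l2 [l3 [H1 [H2 [H3 ->]]]]]].
    exists l1, l2, (l3 + r). split; [exact H1|]. split; [exact H2|]. split; [eapply IH; eauto|ring].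
Qed.

Lemma mpv_pieces_cons (lam : R) (f FL FR : R -> R) (a p r b eps K l : R) (P : list R) :
  0 < eps < r -> a <= p - r ->
  (forall s, p - r <= s < p -> is_derive FL s (f s)) ->
  (forall s, p < s <= p + r -> is_derive FR s (f s)) ->
  lim_right0 (fun d => exp (d / lam) * FL (p - d) - exp (- d / lam) * FR (p + d)) K ->
  (forall z, a <= z <= p + r -> z <> p -> continuous f z) ->
  mpv_pieces lam f (p + r) P b eps l ->
  mpv_pieces lam f a (p :: P) b eps (RInt f a (p - r) + (K - FL (p - r) + FR (p + r)) + l).
Proof.
  intros He Ha HFL HFR HK Hc Hl.
  assert (I0 : is_RInt f a (p - r) (RInt f a (p - r)))
    by (apply is_RInt_continuous_le; [lra|]; intros z Hz; apply Hc; lra).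
  assert (I1 : is_RInt f (p - r) (p - eps) (FL (p - eps) - FL (p - r)))
    by (apply is_RInt_derive_le; [lra| |]; intros z Hz; [apply HFL|apply Hc]; lra).
  assert (I2 : is_RInt f (p + eps) (p + r) (FR (p + r) - FR (p + eps)))
    by (apply is_RInt_derive_le; [lra| |]; intros z Hz; [apply HFR|apply Hc]; lra).
  exists (RInt f a (p - r) + (FL (p - eps) - FL (p - r))), (K - FL (p - eps) + FR (p + eps)),
    (FR (p + r) - FR (p + eps) + l).
  split; [exact (is_RInt_Chasles f _ _ _ _ _ I0 I1)|].
  split; [apply (pole_lim_antiderivatives lam f FL FR p r); auto; [lra|]; intros z Hz Hp; apply Hc; lra|].
  split; [now apply (mpv_pieces_Chasles_l lam f _ (p + r))|ring].
Qed.

Lemma StronglySorted_gap (p b : R) (P : list R) : StronglySorted Rlt (p :: P) -> p < b ->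
  (forall s, In s P -> s < b) -> exists g, 0 < g /\ p + g <= b /\ forall s, In s P -> p + g <= s.
Proof.
  intros HS Hb HPb. inversion HS as [|? ? HS' HF]; subst. destruct P as [|s0 P0].
  - exists (b - p). split; [lra|]. split; [lra|intros s []].
  - assert (Hs0 : p < s0) by (inversion HF; auto). assert (s0 < b) by (apply HPb; now left).
    exists (s0 - p). split; [lra|]. split; [lra|]. intros s [<-|Hs]; [lra|].
    inversion HS' as [|? ? _ HF0]. assert (s0 < s) by (apply (proj1 (Forall_forall _ _) HF0); auto). lra.
Qed.

Lemma mpv_pieces_exist (lam : R) (f : R -> R) (P : list R) : StronglySorted Rlt P -> forall a b,
  a <= b -> (forall p, In p P -> a < p < b) ->
  (forall z, a <= z <= b -> ~ In z P -> continuous f z) ->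
  (forall p, In p P -> mpv_regular_pole lam f p) ->
  exists l eps0, 0 < eps0 /\
    forall eps, 0 < eps < eps0 -> pole_sep a P b eps /\ mpv_pieces lam f a P b eps l.
Proof.
  intros HS. induction HS as [|p P HS IH HF]; intros a b Hab HP Hc Hreg.
  - exists (RInt f a b), 1. split; [lra|]. intros eps He. split; [exact Hab|].
    apply is_RInt_continuous_le; auto.
  - assert (Hp : a < p < b) by (apply HP; left; auto).
    destruct (StronglySorted_gap p b P) as [g [Hg [Hgb HgP]]]; [now constructor|lra|
      intros s Hs; apply HP; now right|].
    destruct (Hreg p (or_introl eq_refl)) as [rho [FL [FR [K [Hrho [HFL [HFR HK]]]]]]].
    set (r := Rmin rho (Rmin ((p - a) / 2) (g / 2))).
    assert (Hr : 0 < r /\ r <= rho /\ r <= (p - a) / 2 /\ r <= g / 2).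
    { unfold r. repeat split.
      - apply Rmin_pos; auto. apply Rmin_pos; lra.
      - apply Rmin_l.
      - eapply Rle_trans; [apply Rmin_r|apply Rmin_l].
      - eapply Rle_trans; [apply Rmin_r|apply Rmin_r]. }
    destruct (IH (p + r) b) as [l [e0 [He0 Hl]]].
    + lra.
    + intros s Hs. specialize (HgP s Hs). assert (a < s < b) by (apply HP; now right). lra.
    + intros z Hz Hn. apply Hc; [lra|]. intros [->|Hz']; [lra|contradiction].
    + intros q Hq. apply Hreg. now right.
    + exists (RInt f a (p - r) + (K - FL (p - r) + FR (p + r)) + l), (Rmin e0 r).
      split; [apply Rmin_pos; lra|]. intros eps He.
      assert (He1 : eps < e0) by (eapply Rlt_le_trans; [apply He|apply Rmin_l]).
      assert (He2 : eps < r) by (eapply Rlt_le_trans; [apply He|apply Rmin_r]).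
      destruct (Hl eps (conj (proj1 He) He1)) as [Hsep Hpieces]. split.
      * simpl. split; [lra|]. apply (pole_sep_le_l (p + r)); auto; lra.
      * apply (mpv_pieces_cons lam f FL FR); auto; try lra.
        -- intros s Hs. apply HFL. lra.
        -- intros s Hs. apply HFR. lra.
        -- intros z Hz Hzp. apply Hc; [lra|]. intros [E|Hz']; [lra|]. specialize (HgP z Hz'). lra.
Qed.

Lemma is_mpv_exists (lam : R) (f : R -> R) (Zs : R -> Prop) (a b : R) (P : list R) :
  a <= b -> ~ Zs a -> ~ Zs b -> Sorted Rlt P ->
  (forall s, In s P <-> a < s < b /\ Zs s) ->
  (forall z, a <= z <= b -> ~ Zs z -> continuous f z) ->
  (forall p, In p P -> mpv_regular_pole lam f p) ->
  exists l, is_mpv lam f Zs a b l.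
Proof.
  intros Hab Ha Hb HS HP Hc Hreg.
  destruct (mpv_pieces_exist lam f P (Sorted_StronglySorted Rlt_trans HS) a b Hab) as [l [e0 [He0 H]]]; auto.
  - intros p Hp. apply HP, Hp.
  - intros z Hz Hn. apply Hc; auto. intros HZ.
    destruct (Req_dec z a) as [->|]; [contradiction|]. destruct (Req_dec z b) as [->|]; [contradiction|].
    apply Hn, HP. split; auto; lra.
  - exists l, P. split; auto. split; auto. now exists e0.
Qed.

Lemma StronglySorted_Rlt_eq (P1 P2 : list R) : StronglySorted Rlt P1 -> StronglySorted Rlt P2 ->
  (forall s, In s P1 <-> In s P2) -> P1 = P2.
Proof.
  revert P2. induction P1 as [|h1 t1 IH]; intros [|h2 t2] H1 H2 Hi; auto.
  - exfalso; apply (proj2 (Hi h2)); now left.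
  - exfalso; apply (proj1 (Hi h1)); now left.
  - inversion H1 as [|? ? H1' F1]; inversion H2 as [|? ? H2' F2]; subst.
    assert (A1 : forall s, In s t1 -> h1 < s) by (apply Forall_forall, F1).
    assert (A2 : forall s, In s t2 -> h2 < s) by (apply Forall_forall, F2).
    assert (E : h1 = h2).
    { destruct (proj1 (Hi h1) (or_introl eq_refl)) as [X1|X1]; auto.
      destruct (proj2 (Hi h2) (or_introl eq_refl)) as [X2|X2]; auto.
      apply A2 in X1; apply A1 in X2; lra. }
    subst h2. f_equal. apply IH; auto. intros s; split; intros Hs.
    + destruct (proj1 (Hi s) (or_intror Hs)) as [<-|]; auto. apply A1 in Hs; lra.
    + destruct (proj2 (Hi s) (or_intror Hs)) as [<-|]; auto. apply A2 in Hs; lra.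
Qed.

Lemma mpv_pieces_unique (lam : R) (f : R -> R) (P : list R) : forall (a b eps l1 l2 : R),
  mpv_pieces lam f a P b eps l1 -> mpv_pieces lam f a P b eps l2 -> l1 = l2.
Proof.
  induction P as [|p P IH]; simpl; intros a b eps l1 l2 H1 H2.
  - now rewrite <- (is_RInt_unique _ _ _ _ H1), (is_RInt_unique _ _ _ _ H2).
  - destruct H1 as [x1 [x2 [x3 [A1 [[_ A2] [A3 ->]]]]]].
    destruct H2 as [y1 [y2 [y3 [B1 [[_ B2] [B3 ->]]]]]].
    rewrite <- (is_RInt_unique _ _ _ _ A1), (is_RInt_unique _ _ _ _ B1), (lim_right0_unique _ _ _ A2 B2).
    f_equal. eapply IH; eauto.
Qed.

Lemma is_mpv_unique (lam : R) (f : R -> R) (Zs : R -> Prop) (a b l1 l2 : R) :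
  is_mpv lam f Zs a b l1 -> is_mpv lam f Zs a b l2 -> l1 = l2.
Proof.
  intros [P1 [S1 [I1 [e1 [He1 H1]]]]] [P2 [S2 [I2 [e2 [He2 H2]]]]].
  assert (P1 = P2) as <-.
  { apply StronglySorted_Rlt_eq; try apply (Sorted_StronglySorted Rlt_trans); auto.
    intros s; rewrite I1, I2; tauto. }
  set (e := Rmin e1 e2 / 2).
  assert (0 < Rmin e1 e2) by now apply Rmin_pos.
  assert (Rmin e1 e2 <= e1) by apply Rmin_l. assert (Rmin e1 e2 <= e2) by apply Rmin_r.
  destruct (H1 e ltac:(unfold e; lra)) as [_ A]. destruct (H2 e ltac:(unfold e; lra)) as [_ B].
  eapply mpv_pieces_unique; eauto.
Qed.

Lemma is_mpv_Chasles (lam : R) (f : R -> R) (Zs : R -> Prop) (a b b' l : R) :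
  is_mpv lam f Zs a b l -> b <= b' ->
  (forall s, b <= s <= b' -> ~ Zs s) -> (forall s, b <= s <= b' -> continuous f s) ->
  is_mpv lam f Zs a b' (l + RInt f b b').
Proof.
  intros [P [S [I [e [He H]]]]] Hbb HZ Hc. exists P. split; auto. split.
  - intros s. rewrite I. split; intros [A B]; split; auto; try lra.
    destruct (Rlt_or_le s b); try lra. exfalso. apply (HZ s); auto; lra.
  - exists e; split; auto. intros eps Heps. destruct (H eps Heps) as [A B]. split.
    + eapply pole_sep_le_r; eauto.
    + eapply mpv_pieces_Chasles_r; eauto. now apply is_RInt_continuous_le.
Qed.

Lemma is_mpv_scal (lam : R) (f : R -> R) (Zs : R -> Prop) (a b l c : R) :
  is_mpv lam f Zs a b l -> is_mpv lam (fun s => c * f s) Zs a b (c * l).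
Proof.
  intros [P [S [I [e [He H]]]]]. exists P. split; auto. split; auto. exists e; split; auto.
  intros eps Heps. destruct (H eps Heps) as [A B]. split; auto. clear A H I S.
  revert a l B. induction P as [|p P IH]; simpl; intros a l B.
  - exact (is_RInt_Rscal f a b c l B).
  - destruct B as [x1 [x2 [x3 [A1 [[A2 A5] [A3 ->]]]]]].
    exists (c * x1), (c * x2), (c * x3). split; [exact (is_RInt_Rscal f _ _ c x1 A1)|].
    split; [split|split; [auto|ring]].
    + intros d Hd. destruct (A2 d Hd) as [[l1 E1] [l2 E2]].
      split; eexists; [apply (is_RInt_Rscal f _ _ c l1 E1)|apply (is_RInt_Rscal f _ _ c l2 E2)].
    + apply (lim_right0_ext (fun d => c * (exp (d / lam) * RInt f (p - eps) (p - d)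
          + exp (- d / lam) * RInt f (p + d) (p + eps))) _ _ eps); [lra| |].
      * intros d Hd. destruct (A2 d Hd) as [[l1 E1] [l2 E2]].
        rewrite (is_RInt_unique _ _ _ _ E1), (is_RInt_unique _ _ _ _ E2),
          (is_RInt_unique _ _ _ _ (is_RInt_Rscal f _ _ c l1 E1)),
          (is_RInt_unique _ _ _ _ (is_RInt_Rscal f _ _ c l2 E2)).
        ring.
      * apply filterlim_Rmult; [apply filterlim_const|exact A5].
Qed.

Lemma sorted_filter_interval (Z : list R) (a b : R) : Sorted Rlt Z ->
  exists P, Sorted Rlt P /\ forall s, In s P <-> a < s < b /\ In s Z.
Proof.
  intros HS. apply (Sorted_StronglySorted Rlt_trans) in HS.
  exists (filter (fun s => if Rlt_dec a s then if Rlt_dec s b then true else false else false) Z). split.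
  - apply StronglySorted_Sorted. induction HS as [|h t HS IH HF]; simpl; [constructor|].
    destruct (Rlt_dec a h); [destruct (Rlt_dec h b)|]; auto. constructor; auto.
    apply Forall_forall. intros x Hx. apply filter_In in Hx as [Hx _].
    now apply (proj1 (Forall_forall _ _) HF).
  - intros s. rewrite filter_In.
    destruct (Rlt_dec a s); [destruct (Rlt_dec s b)|]; split; intros H; try tauto;
      try (destruct H; discriminate); lra.
Qed.

(* The derivative of [(a^2 + b^2) e^{K t}] divided by [e^{K t}], for [a = w], [b = w'],
   [w'' = - (w' + q w) / lam] and [K = 1 + 2 / lam + Qm / lam]. *)
Lemma damped_energy_rate_nonneg (lam a b q Qm : R) : 0 < lam -> Rabs q <= Qm ->
  0 <= 2 * a * b + 2 * b * (- (b + q * a) / lam) + (1 + 2 / lam + Qm / lam) * (a ^ 2 + b ^ 2).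
Proof.
  intros Hl Hq.
  replace (2 * a * b + 2 * b * (- (b + q * a) / lam) + (1 + 2 / lam + Qm / lam) * (a ^ 2 + b ^ 2))
    with ((a + b) ^ 2 + (2 * a ^ 2 + (Qm * (a ^ 2 + b ^ 2) - 2 * q * a * b)) / lam) by (field; lra).
  assert (0 <= a ^ 2) by apply pow2_ge_0. assert (0 <= b ^ 2) by apply pow2_ge_0.
  assert (0 <= (a - b) ^ 2) by apply pow2_ge_0. assert (0 <= (a + b) ^ 2) by apply pow2_ge_0.
  assert (0 <= Qm * (a ^ 2 + b ^ 2) - 2 * q * a * b).
  { destruct (Rle_or_lt 0 q).
    - rewrite Rabs_right in Hq by lra.
      replace (Qm * (a ^ 2 + b ^ 2) - 2 * q * a * b) with ((Qm - q) * (a ^ 2 + b ^ 2) + q * (a - b) ^ 2) by ring.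
      nra.
    - rewrite Rabs_left in Hq by lra.
      replace (Qm * (a ^ 2 + b ^ 2) - 2 * q * a * b) with ((Qm + q) * (a ^ 2 + b ^ 2) + (- q) * (a + b) ^ 2) by ring.
      nra. }
  apply Rplus_le_le_0_compat; [apply pow2_ge_0|]. apply Rdiv_le_0_compat; [nra|lra].
Qed.

Section DampedOscillator.

Variables (lam : R) (w dw ddw q : R -> R).
Hypothesis Hlam : 0 < lam.
Hypothesis Hw : forall t, 0 <= t -> is_derive w t (dw t).
Hypothesis Hdw : forall t, 0 <= t -> is_derive dw t (ddw t).
Hypothesis Hode : forall t, 0 <= t -> lam * ddw t + dw t + q t * w t = 0.
Hypothesis Hq : forall t, 0 <= t -> continuous q t.
Hypothesis Hw0 : w 0 <> 0.

Lemma continuous_w (t : R) : 0 <= t -> continuous w t.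
Proof. intros Ht. exact (is_derive_continuous _ _ _ (Hw t Ht)). Qed.

Lemma continuous_dw (t : R) : 0 <= t -> continuous dw t.
Proof. intros Ht. exact (is_derive_continuous _ _ _ (Hdw t Ht)). Qed.

Lemma ddw_eq (t : R) : 0 <= t -> ddw t = - (dw t + q t * w t) / lam.
Proof. intros Ht. specialize (Hode t Ht). field_simplify_eq; lra. Qed.

Lemma continuous_ddw (t : R) : 0 < t -> continuous ddw t.
Proof.
  intros Ht. apply (continuous_ext_loc _ (fun y => - (dw y + q y * w y) / lam)).
  - apply (locally_R _ t t Ht). intros y Hy. apply Rabs_lt_between in Hy. symmetry. apply ddw_eq. lra.
  - apply continuous_Rdiv; [|apply continuous_const|lra].
    apply continuous_Ropp, continuous_Rplus; [apply continuous_dw; lra|].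
    apply continuous_Rmult; [apply Hq|apply continuous_w]; lra.
Qed.

(* [(w^2 + w'^2) e^{K t}] is nondecreasing for a suitable [K], and it is positive at [0]. *)
Lemma zero_simple (p : R) : 0 <= p -> w p = 0 -> dw p <> 0.
Proof.
  intros Hp Hwp Hdp.
  destruct (Rle_lt_or_eq_dec 0 p Hp) as [Hp'|<-]; [|contradiction].
  destruct (continuity_ab_maj (fun t => Rabs (q t)) 0 p Hp) as [Mx [HM HMx]].
  { intros c Hc. apply continuity_pt_continuous, continuous_Rabs_comp, Hq. lra. }
  set (Qm := Rabs (q Mx)). set (K := 1 + 2 / lam + Qm / lam).
  set (U := fun t => (w t ^ 2 + dw t ^ 2) * exp (K * t)).
  set (dU := fun t => (2 * w t * dw t + 2 * dw t * ddw t) * exp (K * t) + (w t ^ 2 + dw t ^ 2) * (K * exp (K * t))).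
  assert (HD : forall t, 0 <= t -> is_derive U t (dU t)).
  { intros t Ht. unfold U, dU. eapply is_derive_value.
    2: { apply is_derive_Rmult.
         - apply is_derive_Rplus; apply is_derive_pow; [apply Hw|apply Hdw]; auto.
         - apply is_derive_Rexp, is_derive_Rscal, is_derive_Rid. }
    simpl; ring. }
  destruct (MVT_le U dU 0 p Hp) as [c [Hc Hm]]; [intros t Ht; apply HD; lra|].
  assert (HU0 : 0 < U 0).
  { unfold U. rewrite Rmult_0_r, exp_0, Rmult_1_r. assert (0 < w 0 ^ 2) by (rewrite <- Rsqr_pow2; now apply Rsqr_pos_lt).
    assert (0 <= dw 0 ^ 2) by apply pow2_ge_0. lra. }
  assert (HUp : U p = 0) by (unfold U; rewrite Hwp, Hdp; ring).
  assert (Hpos : 0 <= dU c).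
  { unfold dU. rewrite (ddw_eq c) by lra.
    assert (A := damped_energy_rate_nonneg lam (w c) (dw c) (q c) Qm Hlam (HM c Hc)). fold K in A.
    assert (He := exp_pos (K * c)). nra. }
  nra.
Qed.

Lemma sqr_w_dw_bounded_below (T0 : R) : 0 <= T0 ->
  exists m0, 0 < m0 /\ forall t, 0 <= t <= T0 -> m0 <= w t * w t + dw t * dw t.
Proof.
  intros HT.
  destruct (continuity_ab_min (fun t => w t * w t + dw t * dw t) 0 T0) as [mn [Hmn Hmn']]; [lra| |].
  { intros c Hc. apply continuity_pt_continuous.
    apply continuous_Rplus; apply continuous_Rmult; try apply continuous_w; try apply continuous_dw; lra. }
  exists (w mn * w mn + dw mn * dw mn). split; [|exact Hmn].
  destruct (Req_dec (w mn) 0) as [E|E].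
  - assert (dw mn <> 0) by (apply zero_simple; lra). rewrite E.
    assert (0 < dw mn * dw mn) by (apply Rsqr_pos_lt; auto). lra.
  - assert (0 < w mn * w mn) by (apply Rsqr_pos_lt; auto). assert (0 <= dw mn * dw mn) by nra. lra.
Qed.

Lemma ddw_bounded (T0 : R) : 0 <= T0 -> exists B, 0 < B /\ forall t, 0 <= t <= T0 -> Rabs (ddw t) <= B.
Proof.
  intros HT.
  destruct (continuity_ab_maj (fun t => Rabs (- (dw t + q t * w t) / lam)) 0 T0) as [Mx [HM HMx]]; [lra| |].
  { intros c Hc. apply continuity_pt_continuous, continuous_Rabs_comp.
    apply continuous_Rdiv; [|apply continuous_const|lra].
    apply continuous_Ropp, continuous_Rplus; [apply continuous_dw; lra|].
    apply continuous_Rmult; [apply Hq|apply continuous_w]; lra. }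
  exists (Rabs (- (dw Mx + q Mx * w Mx) / lam) + 1). split; [pose proof (Rabs_pos (- (dw Mx + q Mx * w Mx) / lam)); lra|].
  intros t Ht. rewrite (ddw_eq t) by lra. specialize (HM t Ht). simpl in HM. lra.
Qed.

(* Between two zeros [w'] vanishes (Rolle) and [w''] is bounded, so [w'] is small at the first
   zero, whereas [w^2 + w'^2] is bounded below on compacts. *)
Lemma zeros_separated (T0 : R) : 0 < T0 -> exists d0, 0 < d0 /\
  forall z1 z2, 0 <= z1 -> z1 < z2 -> z2 <= T0 -> w z1 = 0 -> w z2 = 0 -> d0 <= z2 - z1.
Proof.
  intros HT.
  destruct (sqr_w_dw_bounded_below T0) as [m0 [Hm0 Hmn]]; [lra|].
  destruct (ddw_bounded T0) as [B [HB HBd]]; [lra|].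
  exists (Rmin 1 (m0 / (B ^ 2 + 1))). split.
  { apply Rmin_pos; [lra|]. apply Rdiv_lt_0_compat; auto. assert (0 <= B ^ 2) by apply pow2_ge_0. lra. }
  intros z1 z2 H1 H12 H2 Hw1 Hw2.
  destruct (MVT_le w dw z1 z2) as [xi [Hxi Exi]]; [lra|intros t Ht; apply Hw; lra|].
  rewrite Hw1, Hw2 in Exi.
  assert (Hdxi : dw xi = 0).
  { assert (E : dw xi * (z2 - z1) = 0) by lra. apply Rmult_integral in E as [E|E]; [auto|lra]. }
  destruct (MVT_le dw ddw z1 xi) as [c [Hc Ec]]; [lra|intros t Ht; apply Hdw; lra|].
  set (e := z2 - z1).
  assert (Hd1 : Rabs (dw z1) <= B * e).
  { replace (dw z1) with (- (ddw c * (xi - z1))) by lra. rewrite Rabs_Ropp, Rabs_mult, (Rabs_right (xi - z1)) by lra.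
    assert (Rabs (ddw c) <= B) by (apply HBd; lra). unfold e. apply Rmult_le_compat; try lra. apply Rabs_pos. }
  assert (Hm1 : m0 <= dw z1 * dw z1) by (assert (A := Hmn z1 ltac:(lra)); rewrite Hw1 in A; lra).
  assert (Hsq : dw z1 * dw z1 <= (B * e) * (B * e)).
  { rewrite <- (Rabs_right (dw z1 * dw z1)) by (apply Rle_ge, Rle_0_sqr). rewrite Rabs_mult.
    assert (0 <= Rabs (dw z1)) by apply Rabs_pos. nra. }
  destruct (Rle_or_lt (Rmin 1 (m0 / (B ^ 2 + 1))) e) as [OK|Bad]; [exact OK|exfalso].
  assert (Hr1 : Rmin 1 (m0 / (B ^ 2 + 1)) <= 1) by apply Rmin_l.
  assert (Hr2 : Rmin 1 (m0 / (B ^ 2 + 1)) <= m0 / (B ^ 2 + 1)) by apply Rmin_r.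
  assert (He : 0 < e) by (unfold e; lra).
  assert (He2 : e * (B ^ 2 + 1) < m0).
  { apply Rlt_le_trans with (m0 / (B ^ 2 + 1) * (B ^ 2 + 1)); [apply Rmult_lt_compat_r; nra|].
    right. field. nra. }
  simpl in He2. nra.
Qed.

Lemma zeros_finite (T0 : R) : 0 < T0 -> (forall t, T0 <= t -> w t <> 0) ->
  exists Z, Sorted Rlt Z /\ forall t, 0 <= t -> (w t = 0 <-> In t Z).
Proof.
  intros HT HT0. destruct (zeros_separated T0 HT) as [d0 [Hd0 Hsep]].
  set (dd := d0 / 2). assert (Hdd : 0 < dd) by (unfold dd; lra).
  (* Each slice of width [dd < d0] contains at most one zero. *)
  assert (Slices : forall N : nat, exists l, Sorted Rlt l /\
     forall s, In s l <-> 0 <= s /\ w s = 0 /\ T0 - INR N * dd <= s).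
  { induction N as [|N [l [Hl Hm]]].
    - exists nil. split; [constructor|]. intros s. simpl. split; [tauto|].
      intros [A [B C]]. apply (HT0 s); auto. lra.
    - rewrite S_INR. assert (0 <= INR N) by apply pos_INR.
      destruct (classic (exists z, 0 <= z /\ w z = 0 /\
          T0 - (INR N + 1) * dd <= z < T0 - INR N * dd)) as [[z [Z1 [Z2 Z3]]]|NE].
      + exists (z :: l). split.
        * constructor; auto. destruct l as [|s l']; constructor.
          assert (In s (s :: l')) as Hs by now left. apply Hm in Hs. lra.
        * intros s. split.
          -- intros [<-|Hs]; [repeat split; auto; lra|].
             apply Hm in Hs as [A [B C]]. repeat split; auto. nra.
          -- intros [A [B C]]. destruct (Rle_or_lt (T0 - INR N * dd) s) as [D|D]; [right; now apply Hm|left].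
             destruct (Rtotal_order s z) as [E|[E|E]]; auto; exfalso.
             ++ assert (d0 <= z - s) by (apply Hsep; auto; nra). unfold dd in *; lra.
             ++ assert (d0 <= s - z) by (apply Hsep; auto; nra). unfold dd in *; lra.
      + exists l. split; auto. intros s. rewrite Hm. split.
        * intros [A [B C]]. repeat split; auto. nra.
        * intros [A [B C]]. repeat split; auto. destruct (Rle_or_lt (T0 - INR N * dd) s); auto.
          exfalso. apply NE. exists s. repeat split; auto; lra. }
  destruct (INR_archimed dd T0 Hdd) as [N HN]. destruct (Slices N) as [l [Hl Hm]].
  exists l. split; auto. intros t Ht. rewrite Hm. split; [intros E; repeat split; auto; lra|tauto].
Qed.

Lemma zero_sign_change (p : R) : 0 < p -> w p = 0 ->
  exists rho sL, 0 < rho < p /\ (sL = 1 \/ sL = -1) /\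
    (forall s, p - rho <= s < p -> w s <> 0 /\ sgn (w s) = sL) /\
    (forall s, p < s <= p + rho -> w s <> 0 /\ sgn (w s) = - sL).
Proof.
  intros Hp Hwp.
  assert (Ha : dw p <> 0) by (apply zero_simple; lra).
  destruct (continuous_eps_delta dw p (continuous_dw p ltac:(lra)) (Rabs (dw p)) (Rabs_pos_lt _ Ha))
    as [eta [Heta He]].
  set (rho := Rmin (eta / 2) (p / 2)).
  assert (Hr : 0 < rho /\ rho <= eta / 2 /\ rho <= p / 2).
  { unfold rho; split; [apply Rmin_pos; lra|split; [apply Rmin_l|apply Rmin_r]]. }
  assert (Hrep : forall s, p - rho <= s <= p + rho -> exists c, Rabs (c - p) < eta /\ w s = dw c * (s - p)).
  { intros s Hs. destruct (Rle_or_lt p s) as [A|A].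
    - destruct (MVT_le w dw p s A) as [c [Hc1 Ec]]; [intros t Ht; apply Hw; lra|].
      exists c. split; [apply Rabs_lt_between; lra|lra].
    - destruct (MVT_le w dw s p) as [c [Hc1 Ec]]; [lra|intros t Ht; apply Hw; lra|].
      exists c. split; [apply Rabs_lt_between; lra|nra]. }
  exists rho, (- sgn (dw p)). split; [lra|].
  destruct (Rlt_or_le 0 (dw p)) as [Pos|Neg].
  - rewrite sgn_pos by lra. rewrite Rabs_right in He by lra.
    split; [right; ring|]. split; intros s Hs; destruct (Hrep s ltac:(lra)) as [c [Hc1 Ec]];
      specialize (He c Hc1); apply Rabs_lt_between in He.
    + assert (w s < 0) by (rewrite Ec; nra). split; [lra|now apply sgn_neg].
    + assert (0 < w s) by (rewrite Ec; nra). split; [lra|rewrite sgn_pos; auto; ring].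
  - rewrite sgn_neg by lra. rewrite Rabs_left in He by lra.
    split; [left; ring|]. split; intros s Hs; destruct (Hrep s ltac:(lra)) as [c [Hc1 Ec]];
      specialize (He c Hc1); apply Rabs_lt_between in He.
    + assert (0 < w s) by (rewrite Ec; nra). split; [lra|rewrite sgn_pos; auto; ring].
    + assert (w s < 0) by (rewrite Ec; nra). split; [lra|rewrite sgn_neg; auto; ring].
Qed.

Definition logder (s : R) : R := dw s / w s.

Definition Qint (s : R) : R := RInt (fun r => q r * exp (r / lam) / lam) 0 s.

Definition Phi (s : R) : R := - (logder s * exp (s / lam)) - Qint s.

(* The inner integrand of [Omega] is [e^{-t/lam} sgn (w t)] times [inner_density] (see [omega_integrand_eq]). *)
Definition inner_density (s : R) : R := sgn (w s) * (logder s ^ 2 * exp (s / lam)).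

Lemma continuous_logder (s : R) : 0 <= s -> w s <> 0 -> continuous logder s.
Proof. intros Hs Hws. apply continuous_Rdiv; [apply continuous_dw|apply continuous_w|]; auto. Qed.

Lemma Qint_derive (s : R) : 0 < s -> is_derive Qint s (q s * exp (s / lam) / lam).
Proof.
  intros Hs.
  assert (Hc : forall z, 0 <= z -> continuous (fun r => q r * exp (r / lam) / lam) z).
  { intros z Hz. apply continuous_Rdiv; [|apply continuous_const|lra].
    apply continuous_Rmult; [now apply Hq|apply continuous_exp_div]. }
  apply (is_derive_RInt (fun r => q r * exp (r / lam) / lam) Qint 0 s); [|apply Hc; lra].
  apply (locally_R _ s s Hs). intros b Hb. apply Rabs_lt_between in Hb.
  apply is_RInt_continuous_le; [lra|]. intros z Hz. apply Hc. lra.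
Qed.

(* [Phi] is an antiderivative of [logder^2 e^{s/lam}] thanks to [lam w'' + w' = - q w]. *)
Lemma Phi_derive (s : R) : 0 < s -> w s <> 0 -> is_derive Phi s (logder s ^ 2 * exp (s / lam)).
Proof.
  intros Hs Hws. unfold Phi, logder.
  eapply is_derive_value.
  2: { apply is_derive_Rminus; [apply is_derive_Ropp, is_derive_Rmult|apply Qint_derive; lra].
       - apply is_derive_div; [apply Hdw|apply Hw|]; auto; lra.
       - apply is_derive_exp_div. }
  rewrite (ddw_eq s) by lra. field. split; lra.
Qed.

Lemma continuous_inner_density (s : R) : 0 <= s -> w s <> 0 -> continuous inner_density s.
Proof.
  intros Hs Hws. apply continuous_Rmult; [apply continuous_sgn_comp; auto; now apply continuous_w|].
  apply continuous_Rmult; [|apply continuous_exp_div].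
  apply (continuous_ext (fun s => logder s * logder s)); [intros; simpl; ring|].
  apply continuous_Rmult; now apply continuous_logder.
Qed.

Lemma lim_logder_sum (p : R) : 0 < p -> w p = 0 ->
  exists L : R, lim_right0 (fun d => logder (p - d) + logder (p + d)) L.
Proof.
  intros Hp Hwp. assert (Ha : dw p <> 0) by (apply zero_simple; lra).
  destruct (zero_sign_change p Hp Hwp) as [rho [sL [Hr [_ [HL1 HR1]]]]].
  assert (Ap : lim_right0 (fun d => dw (p + d) / w (p + d) - / d) (ddw (p + 0) / 2 * / dw (p + 0))).
  { apply (lim_right0_log_derivative (fun d => w (p + d)) (fun d => dw (p + d)) (fun d => ddw (p + d)) rho); [lra|now rewrite Rplus_0_r|now rewrite Rplus_0_r| | | |].
    - intros d Hd. apply is_derive_shift, Hw. lra.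
    - intros d Hd. apply is_derive_shift, Hdw. lra.
    - apply (continuous_comp (fun d => p + d)); [apply continuous_Rplus; [apply continuous_const|apply continuous_id]|].
      rewrite Rplus_0_r. apply continuous_ddw. lra.
    - intros d Hd. apply HR1. lra. }
  assert (Am : lim_right0 (fun d => - dw (p - d) / w (p - d) - / d) (ddw (p - 0) / 2 * / - dw (p - 0))).
  { apply (lim_right0_log_derivative (fun d => w (p - d)) (fun d => - dw (p - d)) (fun d => ddw (p - d)) rho); [lra|now rewrite Rminus_0_r| | | | |].
    - rewrite Rminus_0_r. lra.
    - intros d Hd. apply is_derive_shift_neg, Hw. lra.
    - intros d Hd. eapply is_derive_value; [|apply is_derive_Ropp, is_derive_shift_neg, Hdw; lra]. ring.
    - apply (continuous_comp (fun d => p - d)); [apply continuous_Rminus; [apply continuous_const|apply continuous_id]|].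
      rewrite Rminus_0_r. apply continuous_ddw. lra.
    - intros d Hd. apply HL1. lra. }
  eexists. apply (lim_right0_ext (fun d => - (- dw (p - d) / w (p - d) - / d) + (dw (p + d) / w (p + d) - / d)) _ _ rho);
    [lra| |exact (filterlim_Rplus _ _ _ _ (filterlim_Ropp _ _ Am) Ap)].
  intros d Hd. unfold logder. field. repeat split; try lra; [apply HR1|apply HL1]; lra.
Qed.

(* The weights [e^{+-d/lam}] differ by [O(d)], which kills the [ln d] singularity. *)
Lemma lim_log_sqr_mpv (p : R) : 0 < p -> w p = 0 ->
  exists L : R, lim_right0 (fun d => exp (d / lam) * ln (w (p - d) ^ 2) - exp (- d / lam) * ln (w (p + d) ^ 2)) L.
Proof.
  intros Hp Hwp.
  destruct (zero_sign_change p Hp Hwp) as [rho [sL [Hr [_ [HL1 HR1]]]]].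
  assert (Ha : dw p <> 0) by (apply zero_simple; lra).
  set (qp := fun d => (w (p + d) - w p) / d). set (qm := fun d => (w (p - d) - w p) / d).
  assert (Qp : lim_right0 (fun d => ln (qp d * qp d)) (ln (dw p * dw p))).
  { apply (filterlim_continuous _ ln); [|apply continuous_ln, Rsqr_pos_lt; auto].
    apply filterlim_Rmult; apply lim_right0_diff_quot, Hw; lra. }
  assert (Qm : lim_right0 (fun d => ln (qm d * qm d)) (ln (- dw p * - dw p))).
  { apply (filterlim_continuous _ ln); [|apply continuous_ln, Rsqr_pos_lt; lra].
    apply filterlim_Rmult; apply lim_right0_diff_quot_neg, Hw; lra. }
  set (h := fun s => exp (s / lam) - exp (- s / lam)).
  assert (Hh : lim_right0 (fun d => (h (0 + d) - h 0) / d) (exp (0 / lam) / lam - - exp (- 0 / lam) / lam)).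
  { apply lim_right0_diff_quot, is_derive_Rminus; [apply is_derive_exp_div|apply is_derive_exp_neg_div]. }
  eexists. apply (lim_right0_ext (fun d => (ln (qm d * qm d) - ln (qp d * qp d))
      + (exp (d / lam) - 1) * ln (qm d * qm d) - (exp (- d / lam) - 1) * ln (qp d * qp d)
      + 2 * (((h (0 + d) - h 0) / d) * (d * ln d))) _ _ rho); [lra| |].
  - intros d Hd.
    destruct (HL1 (p - d) ltac:(lra)) as [N1 _]. destruct (HR1 (p + d) ltac:(lra)) as [N2 _].
    assert (Wp : w (p + d) = qp d * d) by (unfold qp; rewrite Hwp; field; lra).
    assert (Wm : w (p - d) = qm d * d) by (unfold qm; rewrite Hwp; field; lra).
    assert (Pp : 0 < qp d * qp d) by (apply Rsqr_pos_lt; intros E; rewrite E, Rmult_0_l in Wp; auto).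
    assert (Pm : 0 < qm d * qm d) by (apply Rsqr_pos_lt; intros E; rewrite E, Rmult_0_l in Wm; auto).
    replace (w (p + d) ^ 2) with ((qp d * qp d) * (d * d)) by (rewrite Wp; ring).
    replace (w (p - d) ^ 2) with ((qm d * qm d) * (d * d)) by (rewrite Wm; ring).
    assert (Hd2 : 0 < d * d) by nra.
    rewrite (ln_mult (qp d * qp d) (d * d)), (ln_mult (qm d * qm d) (d * d)), (ln_mult d d) by lra. unfold h. rewrite Rplus_0_l.
    unfold Rdiv. rewrite Ropp_0, !Rmult_0_l, exp_0. field. lra.
  - apply filterlim_Rplus; [apply filterlim_Rminus; [apply filterlim_Rplus|]|].
    + apply filterlim_Rminus; [exact Qm|exact Qp].
    + apply filterlim_Rmult; [apply filterlim_Rminus; [apply lim_right0_exp_div|apply filterlim_const]|exact Qm].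
    + apply filterlim_Rmult; [apply filterlim_Rminus; [apply lim_right0_exp_neg_div|apply filterlim_const]|exact Qp].
    + apply filterlim_Rmult; [apply filterlim_const|apply filterlim_Rmult; [exact Hh|apply lim_right0_xlnx]].
Qed.

Lemma inner_density_regular_pole (p : R) : 0 < p -> w p = 0 -> mpv_regular_pole lam inner_density p.
Proof.
  intros Hp Hwp.
  destruct (zero_sign_change p Hp Hwp) as [rho [sL [Hr [_ [HL1 HR1]]]]].
  destruct (lim_logder_sum p Hp Hwp) as [L HL].
  exists rho, (fun s => sL * Phi s), (fun s => - sL * Phi s).
  eexists. split; [lra|]. split; [|split].
  - intros s Hs. destruct (HL1 s Hs) as [N E]. unfold inner_density. rewrite E.
    apply is_derive_Rscal, Phi_derive; [lra|auto].
  - intros s Hs. destruct (HR1 s Hs) as [N E]. unfold inner_density. rewrite E.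
    apply is_derive_Rscal, Phi_derive; [lra|auto].
  - apply (lim_right0_ext (fun d => sL * (- exp (p / lam) * (logder (p - d) + logder (p + d))
        - exp (d / lam) * Qint (p - d) - exp (- d / lam) * Qint (p + d))) _ _ rho); [lra| |].
    + intros d Hd. unfold Phi.
      replace (exp ((p - d) / lam)) with (exp (p / lam) * exp (- d / lam))
        by (rewrite <- exp_plus; f_equal; field; lra).
      replace (exp ((p + d) / lam)) with (exp (p / lam) * exp (d / lam))
        by (rewrite <- exp_plus; f_equal; field; lra).
      assert (E : exp (d / lam) * exp (- d / lam) = 1) by (rewrite <- exp_plus, <- exp_0; f_equal; field; lra).
      apply Rminus_diag_uniq.
      transitivity (sL * exp (p / lam) * (logder (p - d) + logder (p + d)) * (exp (d / lam) * exp (- d / lam) - 1));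
        [ring|rewrite E; ring].
    + apply filterlim_Rmult; [apply filterlim_const|].
      repeat apply filterlim_Rminus.
      * apply filterlim_Rmult; [apply filterlim_const|exact HL].
      * apply filterlim_Rmult; [apply lim_right0_exp_div|]. apply lim_right0_shift_neg.
        eapply is_derive_continuous, Qint_derive. lra.
      * apply filterlim_Rmult; [apply lim_right0_exp_neg_div|]. apply lim_right0_shift.
        eapply is_derive_continuous, Qint_derive. lra.
Qed.

Definition admissible_density (f : R -> R) : Prop :=
  (forall z, 0 <= z -> w z <> 0 -> continuous f z) /\
  (forall p, 0 < p -> w p = 0 -> mpv_regular_pole lam f p).

Definition mpv_from0 (f : R -> R) (t : R) : R :=
  epsilon (inhabits 0) (fun l => is_mpv lam f (fun s => w s = 0) 0 t l).

(* Only [t >= 0] matters; the extension to [t < 0] makes [inner_mpv] continuous at [0]. *)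
Definition inner_mpv (t : R) : R :=
  if Rle_dec 0 t then mpv_from0 inner_density t else RInt (fun s => inner_density (Rmax 0 s)) 0 t.

Definition outer_density (t : R) : R := exp (- t / lam) * sgn (w t) * inner_mpv t.

Definition outer_mpv (t : R) : R := mpv_from0 outer_density t.

Lemma inner_density_admissible : admissible_density inner_density.
Proof.
  split; [intros; now apply continuous_inner_density|]. exact inner_density_regular_pole.
Qed.

Lemma inner_mpv_nonneg (t : R) : 0 <= t -> inner_mpv t = mpv_from0 inner_density t.
Proof. intros Ht. unfold inner_mpv. now destruct (Rle_dec 0 t). Qed.

Lemma exp_neg_div_Phi (t : R) : exp (- t / lam) * Phi t = - logder t - exp (- t / lam) * Qint t.
Proof.
  unfold Phi. replace (exp (- t / lam) * (- (logder t * exp (t / lam)) - Qint t))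
    with (- logder t * (exp (- t / lam) * exp (t / lam)) - exp (- t / lam) * Qint t) by ring.
  rewrite <- exp_plus. replace (- t / lam + t / lam) with 0 by (field; lra). rewrite exp_0. ring.
Qed.

Lemma omega_integrand_eq (t : R) :
  omega_integrand lam w dw t = fun s => (exp (- t / lam) * sgn (w t)) * inner_density s.
Proof.
  apply functional_extensionality. intros s. unfold omega_integrand, inner_density, logder.
  rewrite sgn_mult. replace (exp (- (t - s) / lam)) with (exp (- t / lam) * exp (s / lam)); [ring|].
  rewrite <- exp_plus. f_equal. field. lra.
Qed.

Definition Tint (p0 t : R) : R := RInt (fun r => exp (- r / lam) * Qint r) p0 t.

Definition Psi (p0 A t : R) : R := - lam * A * exp (- t / lam) - / 2 * ln (w t ^ 2) - Tint p0 t.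

Lemma Tint_derive (p0 t : R) : 0 < p0 -> 0 < t -> is_derive (Tint p0) t (exp (- t / lam) * Qint t).
Proof.
  intros Hp Ht.
  assert (Hc : forall r, 0 < r -> continuous (fun r => exp (- r / lam) * Qint r) r).
  { intros r Hr. apply continuous_Rmult; [apply continuous_exp_neg_div|].
    eapply is_derive_continuous, Qint_derive, Hr. }
  exact (is_derive_RInt_upper _ p0 0 t Hp Ht Hc).
Qed.

(* [Psi p0 A] is an antiderivative of [outer_density] on intervals where [w] keeps its sign. *)
Lemma Psi_derive (p0 A t : R) : 0 < p0 -> 0 < t -> w t <> 0 ->
  is_derive (Psi p0 A) t (exp (- t / lam) * (A + Phi t)).
Proof.
  intros Hp Ht Hwt. assert (Hw2 : 0 < w t ^ 2) by (rewrite <- Rsqr_pow2; now apply Rsqr_pos_lt).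
  unfold Psi. eapply is_derive_value.
  2: { apply is_derive_Rminus; [apply is_derive_Rminus|now apply Tint_derive].
       - apply is_derive_Rscal, is_derive_exp_neg_div.
       - apply is_derive_Rscal, is_derive_Rln; auto. apply is_derive_pow, Hw. lra. }
  rewrite Rmult_plus_distr_l, exp_neg_div_Phi. unfold logder. simpl. field. split; lra.
Qed.

Definition tail_density (T1 t : R) : R := exp (- t / lam) * (Phi t - Phi T1).

Lemma tail_density_nonneg (T1 t : R) : 0 < T1 <= t -> (forall s, T1 <= s <= t -> w s <> 0) ->
  0 <= tail_density T1 t.
Proof.
  intros Ht Hn. unfold tail_density. apply Rmult_le_pos; [left; apply exp_pos|].
  destruct (MVT_le Phi (fun s => logder s ^ 2 * exp (s / lam)) T1 t) as [c [Hc Ec]]; [lra| |].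
  - intros z Hz. apply Phi_derive; [lra|apply Hn; lra].
  - rewrite Ec. apply Rmult_le_pos; [|lra]. apply Rmult_le_pos; [apply pow2_ge_0|left; apply exp_pos].
Qed.

Lemma exp_neg_div_exp_div (t : R) : exp (- t / lam) * exp (t / lam) = 1.
Proof. rewrite <- exp_plus, <- exp_0. f_equal. field. lra. Qed.

Lemma tail_density_derive (T1 s : R) : 0 < s -> w s <> 0 ->
  is_derive (tail_density T1) s (- tail_density T1 s / lam + logder s ^ 2).
Proof.
  intros Hs Hws. unfold tail_density. eapply is_derive_value.
  2: { apply is_derive_Rmult; [apply is_derive_exp_neg_div|].
       apply is_derive_Rminus; [apply Phi_derive; auto|apply is_derive_Rconst]. }
  apply Rminus_diag_uniq.
  transitivity (logder s ^ 2 * (exp (- s / lam) * exp (s / lam) - 1)); [field; lra|].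
  rewrite exp_neg_div_exp_div. ring.
Qed.

(* [- lam N - (2 lam / m^2) E - RInt N] is nondecreasing for [N := tail_density T1], because
   [logder^2 <= w'^2 / m^2 <= 2 Sd / m^2]. *)
Lemma tail_integral_bounded (T0 T1 m : R) (E Sd : R -> R) : 0 < T0 < T1 -> 0 < m ->
  (forall t, T0 <= t -> m <= Rabs (w t)) ->
  (forall t, 0 <= t -> is_derive E t (- Sd t)) -> (forall t, 0 <= t -> 0 <= E t) ->
  (forall t, 0 <= t -> dw t ^ 2 <= 2 * Sd t) ->
  forall t, T1 <= t -> RInt (tail_density T1) T1 t <= 2 * lam / m ^ 2 * E T1.
Proof.
  intros HT Hm HmT HE HE0 HSd t Ht.
  assert (W : forall s, T0 <= s -> w s <> 0).
  { intros s Hs E0. specialize (HmT s Hs). rewrite E0, Rabs_R0 in HmT. lra. }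
  assert (Hm2 : 0 < m ^ 2) by (apply pow_lt; lra).
  set (N := tail_density T1). set (S := fun s => RInt N T1 s).
  assert (DN : forall s, T0 < s -> is_derive N s (- N s / lam + logder s ^ 2))
    by (intros s Hs; apply tail_density_derive; [lra|apply W; lra]).
  assert (DS : forall s, T0 < s -> is_derive S s (N s)).
  { intros s Hs. apply (is_derive_RInt_upper N T1 T0); [lra|lra|].
    intros z Hz. eapply is_derive_continuous, DN, Hz. }
  set (Lam := fun s => - lam * N s - 2 * lam / m ^ 2 * E s - S s).
  destruct (MVT_le Lam (fun s => lam * (2 * Sd s / m ^ 2 - logder s ^ 2)) T1 t Ht) as [c [Hc Ec]].
  { intros s Hs. unfold Lam. eapply is_derive_value.
    2: { apply is_derive_Rminus; [apply is_derive_Rminus|apply DS; lra];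
         apply is_derive_Rscal; [apply DN|apply HE]; lra. }
    field. split; lra. }
  assert (Hd : 0 <= lam * (2 * Sd c / m ^ 2 - logder c ^ 2)).
  { apply Rmult_le_pos; [lra|]. unfold logder.
    assert ((dw c / w c) ^ 2 <= 2 * Sd c / m ^ 2) by (apply sqr_div_le; [split; [|apply HmT]|apply HSd]; lra).
    lra. }
  assert (L0 : Lam T1 = - 2 * lam / m ^ 2 * E T1).
  { assert (S0 : S T1 = 0) by exact (RInt_point T1 N).
    unfold Lam. rewrite S0. unfold N, tail_density. unfold Rdiv. ring. }
  assert (0 <= N t) by (apply tail_density_nonneg; [lra|intros s Hs; apply W; lra]).
  assert (0 <= 2 * lam / m ^ 2 * E t).
  { apply Rmult_le_pos; [|apply HE0; lra]. unfold Rdiv. apply Rmult_le_pos; [lra|left; now apply Rinv_0_lt_compat]. }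
  assert (Lam T1 <= Lam t) by nra.
  unfold Lam in *. fold (S t). nra.
Qed.

Section FiniteZeros.

Variable Z : list R.
Hypothesis HZs : Sorted Rlt Z.
Hypothesis HZ : forall s, 0 <= s -> (w s = 0 <-> In s Z).

Lemma mpv_from0_spec (f : R -> R) (t : R) : admissible_density f -> 0 <= t -> w t <> 0 ->
  is_mpv lam f (fun s => w s = 0) 0 t (mpv_from0 f t).
Proof.
  intros [Hc Hreg] Ht Hwt. unfold mpv_from0. apply epsilon_spec.
  destruct (sorted_filter_interval Z 0 t HZs) as [P [HP1 HP2]].
  apply (is_mpv_exists lam f _ 0 t P); auto.
  - intros s. rewrite HP2. split; intros [A B]; split; auto; apply HZ; auto; lra.
  - intros z Hz Hn. apply Hc; [lra|exact Hn].
  - intros p Hp. apply HP2 in Hp as [A B]. apply Hreg; [lra|]. apply HZ; auto; lra.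
Qed.

Lemma mpv_from0_Chasles (f : R -> R) (t1 t2 : R) : admissible_density f -> 0 <= t1 <= t2 ->
  (forall s, t1 <= s <= t2 -> w s <> 0) -> mpv_from0 f t2 = mpv_from0 f t1 + RInt f t1 t2.
Proof.
  intros Hf Ht Hn. apply (is_mpv_unique lam f (fun s => w s = 0) 0 t2).
  - apply mpv_from0_spec; auto; [lra|apply Hn; lra].
  - apply is_mpv_Chasles; [apply mpv_from0_spec; auto; [lra|apply Hn; lra]|lra|exact Hn|].
    intros s Hs. apply (proj1 Hf); [lra|now apply Hn].
Qed.

Lemma mpv_from0_0 (f : R -> R) : admissible_density f -> mpv_from0 f 0 = 0.
Proof.
  intros Hf. apply (is_mpv_unique lam f (fun s => w s = 0) 0 0); [apply mpv_from0_spec; auto; lra|].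
  exists nil. split; [constructor|]. split; [intros s; simpl; split; [tauto|lra]|].
  exists 1. split; [lra|]. intros eps He. split; [simpl; lra|].
  exact (@is_RInt_point R_NormedModule f 0).
Qed.

Lemma inner_mpv_Chasles (t1 t2 : R) : 0 <= t1 <= t2 -> (forall s, t1 <= s <= t2 -> w s <> 0) ->
  inner_mpv t2 = inner_mpv t1 + RInt inner_density t1 t2.
Proof.
  intros Ht Hn. rewrite !inner_mpv_nonneg by lra. apply mpv_from0_Chasles; auto. apply inner_density_admissible.
Qed.

Lemma continuous_inner_mpv (t : R) : 0 <= t -> w t <> 0 -> continuous inner_mpv t.
Proof.
  intros Ht Hwt. destruct (continuous_nonzero_nbhd w t (continuous_w t Ht) Hwt) as [eta [Heta Hn]].
  destruct (Rle_lt_or_eq_dec 0 t Ht) as [Tp|<-].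
  - set (e := Rmin eta t / 2).
    assert (He : 0 < e /\ e <= eta / 2 /\ e <= t / 2).
    { unfold e. assert (0 < Rmin eta t) by (apply Rmin_pos; lra).
      assert (Rmin eta t <= eta) by apply Rmin_l. assert (Rmin eta t <= t) by apply Rmin_r. lra. }
    apply (continuous_ext_loc _ (fun y => inner_mpv (t - e) + RInt inner_density (t - e) y)).
    + apply (locally_R _ t e (proj1 He)). intros y Hy. apply Rabs_lt_between in Hy.
      symmetry. apply inner_mpv_Chasles; [lra|]. intros s Hs. apply Hn, Rabs_lt_between. lra.
    + apply continuous_Rplus; [apply continuous_const|]. apply (continuous_RInt_upper _ _ _ e); [lra|].
      intros z Hz. rewrite Rmin_left, Rmax_right in Hz by lra.
      apply continuous_inner_density; [lra|]. apply Hn, Rabs_lt_between. lra.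
  - set (h := fun s => inner_density (Rmax 0 s)).
    apply (continuous_ext_loc _ (fun y => RInt h 0 y)).
    + apply (locally_R _ 0 eta Heta). intros y Hy. rewrite Rminus_0_r in Hy.
      unfold inner_mpv. destruct (Rle_dec 0 y) as [Y|Y]; [|reflexivity].
      rewrite <- inner_mpv_nonneg by lra.
      rewrite (inner_mpv_Chasles 0 y), inner_mpv_nonneg, mpv_from0_0, Rplus_0_l by
        (try apply inner_density_admissible; try lra;
         intros s Hs; apply Hn; rewrite Rminus_0_r; apply Rabs_lt_between; apply Rabs_lt_between in Hy; lra).
      apply RInt_ext. intros z Hz. rewrite Rmin_left, Rmax_right in Hz by lra.
      unfold h. now rewrite Rmax_right by lra.
    + apply (continuous_RInt_upper _ _ _ (eta / 2)); [lra|]. intros z Hz.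
      apply (continuous_comp (fun s => Rmax 0 s)); [apply continuous_Rmax0|].
      apply continuous_inner_density; [apply Rmax_l|]. apply Hn. rewrite Rminus_0_r.
      rewrite Rmin_right, Rmax_right in Hz by lra.
      unfold Rmax. destruct (Rle_dec 0 z); apply Rabs_lt_between; lra.
Qed.

Lemma inner_mpv_sign_interval (a b sigma t0 t : R) : 0 < a ->
  (forall s, a <= s <= b -> w s <> 0 /\ sgn (w s) = sigma) ->
  a <= t0 <= b -> a <= t <= b -> inner_mpv t = inner_mpv t0 + sigma * (Phi t - Phi t0).
Proof.
  intros Ha Hs Ht0 Ht.
  assert (Hseg : forall x y, a <= x <= y -> y <= b -> inner_mpv y = inner_mpv x + sigma * (Phi y - Phi x)).
  { intros x y Hxy Hy. rewrite (inner_mpv_Chasles x y) by (try lra; intros s Hs'; apply Hs; lra).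
    f_equal. apply is_RInt_unique.
    replace (sigma * (Phi y - Phi x)) with (sigma * Phi y - sigma * Phi x) by ring.
    apply (is_RInt_derive_le (fun s => sigma * Phi s)); [lra| |].
    - intros z Hz. destruct (Hs z ltac:(lra)) as [N E]. unfold inner_density. rewrite E.
      apply is_derive_Rscal, Phi_derive; [lra|auto].
    - intros z Hz. apply continuous_inner_density; [lra|apply Hs; lra]. }
  destruct (Rle_or_lt t0 t).
  - apply Hseg; lra.
  - rewrite (Hseg t t0) by lra. ring.
Qed.

Lemma outer_density_sign_interval (a b sigma t0 t : R) : 0 < a ->
  (forall s, a <= s <= b -> w s <> 0 /\ sgn (w s) = sigma) ->
  a <= t0 <= b -> a <= t <= b ->
  outer_density t = exp (- t / lam) * (sigma * inner_mpv t0 - Phi t0 + Phi t).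
Proof.
  intros Ha Hs Ht0 Ht. destruct (Hs t Ht) as [N E].
  assert (S2 : sigma * sigma = 1) by (rewrite <- E; now apply sgn_sqr).
  unfold outer_density. rewrite E, (inner_mpv_sign_interval a b sigma t0 t) by auto.
  apply Rminus_diag_uniq.
  transitivity (exp (- t / lam) * (Phi t - Phi t0) * (sigma * sigma - 1)); [ring|rewrite S2; ring].
Qed.

Lemma is_mpv_omega_integrand (t : R) : 0 <= t -> w t <> 0 ->
  is_mpv lam (omega_integrand lam w dw t) (fun s => w s = 0) 0 t (outer_density t).
Proof.
  intros Ht Hwt. rewrite omega_integrand_eq. unfold outer_density.
  apply is_mpv_scal. rewrite inner_mpv_nonneg by auto. apply mpv_from0_spec; auto. apply inner_density_admissible.
Qed.

Lemma continuous_outer_density (t : R) : 0 <= t -> w t <> 0 -> continuous outer_density t.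
Proof.
  intros Ht Hwt. apply continuous_Rmult; [apply continuous_Rmult|now apply continuous_inner_mpv].
  - apply continuous_exp_neg_div.
  - apply continuous_sgn_comp; auto. now apply continuous_w.
Qed.

Lemma outer_density_regular_pole (p : R) : 0 < p -> w p = 0 -> mpv_regular_pole lam outer_density p.
Proof.
  intros Hp Hwp.
  destruct (zero_sign_change p Hp Hwp) as [rho [sL [Hr [_ [HL1 HR1]]]]].
  set (AL := sL * inner_mpv (p - rho) - Phi (p - rho)).
  set (AR := - sL * inner_mpv (p + rho) - Phi (p + rho)).
  destruct (lim_log_sqr_mpv p Hp Hwp) as [L HL].
  exists rho, (Psi (p - rho) AL), (Psi (p - rho) AR). eexists. split; [lra|]. split; [|split].
  - intros s Hs. destruct (HL1 s Hs) as [Hws _].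
    rewrite (outer_density_sign_interval (p - rho) s sL (p - rho) s); try lra.
    + apply Psi_derive; auto; lra.
    + intros z Hz. apply HL1. lra.
  - intros s Hs. destruct (HR1 s Hs) as [Hws _].
    rewrite (outer_density_sign_interval s (p + rho) (- sL) (p + rho) s); try lra.
    + apply Psi_derive; auto; lra.
    + intros z Hz. apply HR1. lra.
  - assert (Tc : continuous (Tint (p - rho)) p) by (eapply is_derive_continuous, Tint_derive; lra).
    apply (lim_right0_ext (fun d => - lam * AL * exp (- p / lam) * (exp (d / lam) * exp (d / lam))
       + lam * AR * exp (- p / lam) * (exp (- d / lam) * exp (- d / lam))
       - / 2 * (exp (d / lam) * ln (w (p - d) ^ 2) - exp (- d / lam) * ln (w (p + d) ^ 2))
       - exp (d / lam) * Tint (p - rho) (p - d) + exp (- d / lam) * Tint (p - rho) (p + d)) _ _ 1); [lra| |].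
    + intros d _. unfold Psi.
      replace (exp (- (p - d) / lam)) with (exp (- p / lam) * exp (d / lam))
        by (rewrite <- exp_plus; f_equal; field; lra).
      replace (exp (- (p + d) / lam)) with (exp (- p / lam) * exp (- d / lam))
        by (rewrite <- exp_plus; f_equal; field; lra).
      ring.
    + apply filterlim_Rplus; [repeat apply filterlim_Rminus; [apply filterlim_Rplus| |]|].
      * apply filterlim_Rmult; [apply filterlim_const|apply filterlim_Rmult; apply lim_right0_exp_div].
      * apply filterlim_Rmult; [apply filterlim_const|apply filterlim_Rmult; apply lim_right0_exp_neg_div].
      * apply filterlim_Rmult; [apply filterlim_const|exact HL].
      * apply filterlim_Rmult; [apply lim_right0_exp_div|now apply lim_right0_shift_neg].
      * apply filterlim_Rmult; [apply lim_right0_exp_neg_div|now apply lim_right0_shift].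
Qed.

Lemma outer_density_admissible : admissible_density outer_density.
Proof.
  split; [intros; now apply continuous_outer_density|]. exact outer_density_regular_pole.
Qed.


Lemma outer_mpv_spec (t : R) : 0 <= t -> w t <> 0 ->
  is_mpv lam outer_density (fun s => w s = 0) 0 t (outer_mpv t).
Proof. intros Ht Hwt. apply mpv_from0_spec; auto. apply outer_density_admissible. Qed.

Lemma outer_mpv_tail (T0 T1 : R) : 0 < T0 < T1 -> (forall t, T0 <= t -> w t <> 0) -> forall t, T1 <= t ->
  outer_mpv t = outer_mpv T1 + sgn (w T1) * inner_mpv T1 * lam * (exp (- T1 / lam) - exp (- t / lam))
    + RInt (tail_density T1) T1 t.
Proof.
  intros HT W t Ht. set (a := sgn (w T1) * inner_mpv T1). set (N := tail_density T1).
  assert (Hsgn : forall s, T1 <= s <= t -> w s <> 0 /\ sgn (w s) = sgn (w T1)).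
  { intros s Hs. split; [apply W; lra|].
    apply sgn_constant; [lra| |]; intros z Hz; [apply continuous_w|apply W]; lra. }
  unfold outer_mpv. rewrite Rplus_assoc.
  rewrite (mpv_from0_Chasles outer_density T1 t) by (try apply outer_density_admissible; try lra;
    intros s Hs; apply W; lra).
  f_equal. apply is_RInt_unique. apply (is_RInt_ext (fun s => a * exp (- s / lam) + N s)).
  { intros s Hs. rewrite Rmin_left, Rmax_right in Hs by lra.
    assert (E : a * exp (- s / lam) + N s = outer_density s); [|exact E].
    rewrite (outer_density_sign_interval T1 t (sgn (w T1)) T1 s) by first [apply Hsgn | lra].
    unfold N, tail_density, a. ring. }
  apply (is_RInt_plus (fun s => a * exp (- s / lam)) N).
  - replace (a * lam * (exp (- T1 / lam) - exp (- t / lam)))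
      with ((- a * lam) * exp (- t / lam) - (- a * lam) * exp (- T1 / lam)) by ring.
    apply (is_RInt_derive_le (fun s => (- a * lam) * exp (- s / lam))); [lra| |].
    + intros z Hz. eapply is_derive_value; [|apply is_derive_Rscal, is_derive_exp_neg_div]. field. lra.
    + intros z Hz. apply continuous_Rmult; [apply continuous_const|apply continuous_exp_neg_div].
  - apply is_RInt_continuous_le; [lra|]. intros z Hz.
    eapply is_derive_continuous, tail_density_derive; [lra|apply W; lra].
Qed.

Lemma outer_mpv_converges (T0 m : R) (E Sd : R -> R) : 0 < T0 -> 0 < m ->
  (forall t, T0 <= t -> m <= Rabs (w t)) ->
  (forall t, 0 <= t -> is_derive E t (- Sd t)) -> (forall t, 0 <= t -> 0 <= E t) ->
  (forall t, 0 <= t -> dw t ^ 2 <= 2 * Sd t) ->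
  exists Om, filterlim outer_mpv (Rbar_locally p_infty) (locally Om).
Proof.
  intros HT Hm HmT HE HE0 HSd.
  assert (W : forall t, T0 <= t -> w t <> 0).
  { intros t Ht E0. specialize (HmT t Ht). rewrite E0, Rabs_R0 in HmT. lra. }
  set (T1 := T0 + 1). set (a := sgn (w T1) * inner_mpv T1). set (N := tail_density T1).
  assert (HS : forall x y, T1 <= x <= y -> RInt N T1 x <= RInt N T1 y).
  { intros x y Hxy.
    assert (Hex : forall u v, T1 <= u <= v -> ex_RInt N u v).
    { intros u v Huv. eexists. apply is_RInt_continuous_le; [lra|]. intros z Hz.
      eapply is_derive_continuous, tail_density_derive; [|apply W]; unfold T1 in *; lra. }
    rewrite <- (RInt_Chasles N T1 x y) by (apply Hex; lra).
    assert (0 <= RInt N x y); [|unfold plus in *; simpl in *; lra].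
    apply RInt_ge_0; [lra|apply Hex; lra|]. intros z Hz.
    apply tail_density_nonneg; [unfold T1 in *; lra|]. intros s Hs. apply W. unfold T1 in *; lra. }
  destruct (lim_pinfty_nondecreasing (fun t => RInt N T1 t) T1 (2 * lam / m ^ 2 * E T1) HS) as [L HL].
  { intros t Ht. apply (tail_integral_bounded T0 T1 m E Sd); auto. unfold T1; lra. }
  exists (outer_mpv T1 + a * lam * (exp (- T1 / lam) - 0) + L).
  apply (filterlim_ext_loc (fun t => outer_mpv T1 + a * lam * (exp (- T1 / lam) - exp (- t / lam))
    + RInt N T1 t)).
  { exists T1. intros t Ht. symmetry. apply (outer_mpv_tail T0); [unfold T1; lra|exact W|lra]. }
  apply filterlim_Rplus; [apply filterlim_Rplus; [apply filterlim_const|]|exact HL].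
  apply filterlim_Rmult; [apply filterlim_const|].
  apply filterlim_Rminus; [apply filterlim_const|now apply lim_pinfty_exp_neg_div].
Qed.

End FiniteZeros.

Theorem Omega_well_defined_finite_of_dissipation (T0 m : R) (E Sd : R -> R) : 0 < T0 -> 0 < m ->
  (forall t, T0 <= t -> m <= Rabs (w t)) ->
  (forall t, 0 <= t -> is_derive E t (- Sd t)) -> (forall t, 0 <= t -> 0 <= E t) ->
  (forall t, 0 <= t -> dw t ^ 2 <= 2 * Sd t) ->
  Omega_well_defined_finite lam w dw.
Proof.
  intros HT Hm HmT HE HE0 HSd.
  assert (W : forall t, T0 <= t -> w t <> 0).
  { intros t Ht E0. specialize (HmT t Ht). rewrite E0, Rabs_R0 in HmT. lra. }
  destruct (zeros_finite T0 HT W) as [Z [HZs HZ]].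
  split; [now exists Z|].
  exists outer_density. split; [exact (is_mpv_omega_integrand Z HZs HZ)|].
  exists outer_mpv. split; [exact (outer_mpv_spec Z HZs HZ)|].
  exact (outer_mpv_converges Z HZs HZ T0 m E Sd HT Hm HmT HE HE0 HSd).
Qed.

End DampedOscillator.

Lemma sumR_ext (m : nat) (f g : nat -> R) : (forall i, (i < m)%nat -> f i = g i) -> sumR m f = sumR m g.
Proof. induction m; simpl; intros H; auto. rewrite IHm, H; auto; intros; apply H; lia. Qed.

Lemma sumR_plus (m : nat) (f g : nat -> R) : sumR m (fun i => f i + g i) = sumR m f + sumR m g.
Proof. induction m; simpl; [ring|rewrite IHm; ring]. Qed.

Lemma sumR_scal (m : nat) (c : R) (f : nat -> R) : sumR m (fun i => c * f i) = c * sumR m f.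
Proof. induction m; simpl; [ring|rewrite IHm; ring]. Qed.

Lemma sumR_swap (n d : nat) (a : nat -> nat -> R) :
  sumR n (fun i => sumR d (fun j => a i j)) = sumR d (fun j => sumR n (fun i => a i j)).
Proof.
  induction n; simpl; [induction d; simpl; [auto|rewrite <- IHd; ring]|].
  rewrite IHn, <- sumR_plus. reflexivity.
Qed.

Lemma sumR_nonneg (m : nat) (f : nat -> R) : (forall i, (i < m)%nat -> 0 <= f i) -> 0 <= sumR m f.
Proof.
  induction m; simpl; intros H; [lra|].
  assert (0 <= f m) by (apply H; lia). assert (0 <= sumR m f) by (apply IHm; intros; apply H; lia). lra.
Qed.

Lemma sumR_ge_term (m k : nat) (f : nat -> R) : (forall i, (i < m)%nat -> 0 <= f i) -> (k < m)%nat ->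
  f k <= sumR m f.
Proof.
  induction m; simpl; intros H Hk; [lia|].
  destruct (Nat.eq_dec k m) as [->|Ne].
  - assert (0 <= sumR m f) by (apply sumR_nonneg; intros; apply H; lia). lra.
  - assert (f k <= sumR m f) by (apply IHm; [intros; apply H; lia|lia]). assert (0 <= f m) by (apply H; lia). lra.
Qed.

Lemma sumR_derive (m : nat) (F : R -> nat -> R) (F' : nat -> R) (t0 : R) :
  (forall i, (i < m)%nat -> is_derive (fun t => F t i) t0 (F' i)) ->
  is_derive (fun t => sumR m (F t)) t0 (sumR m F').
Proof.
  induction m; simpl; intros H; [apply is_derive_Rconst|].
  apply is_derive_Rplus; [apply IHm; intros; apply H; lia|apply H; lia].
Qed.

Lemma sumR_continuous (m : nat) (F : R -> nat -> R) (t0 : R) :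
  (forall i, (i < m)%nat -> continuous (fun t => F t i) t0) -> continuous (fun t => sumR m (F t)) t0.
Proof.
  induction m; simpl; intros H; [apply continuous_const|].
  apply continuous_Rplus; [apply IHm; intros; apply H; lia|apply H; lia].
Qed.

Definition loss (n d : nat) (x : nat -> nat -> R) (y : nat -> R) (theta : nat -> R) : R :=
  1 / INR n / 2 * sumR n (fun i => (y i - sumR d (fun j => x i j * theta j)) ^ 2).

Lemma loss_nonneg (n d : nat) (x : nat -> nat -> R) (y theta : nat -> R) : 0 <= loss n d x y theta.
Proof.
  unfold loss. apply Rmult_le_pos; [|apply sumR_nonneg; intros; apply pow2_ge_0].
  unfold Rdiv. apply Rmult_le_pos; [|lra]. destruct n as [|n']; [simpl; rewrite Rinv_0; lra|].
  apply Rmult_le_pos; [lra|left; apply Rinv_0_lt_compat, lt_0_INR; lia].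
Qed.

Lemma loss_derive (n d : nat) (x : nat -> nat -> R) (y : nat -> R) (theta : R -> nat -> R)
  (dtheta : nat -> R) (t0 : R) :
  (forall j, (j < d)%nat -> is_derive (fun t => theta t j) t0 (dtheta j)) ->
  is_derive (fun t => loss n d x y (theta t)) t0 (sumR d (fun j => gradL n d x y (theta t0) j * dtheta j)).
Proof.
  intros Hth. set (r := fun i => y i - sumR d (fun j => x i j * theta t0 j)). unfold loss.
  eapply is_derive_value.
  2: { apply is_derive_Rscal.
       apply (sumR_derive n (fun t i => (y i - sumR d (fun j => x i j * theta t j)) ^ 2)
         (fun i => INR 2 * (0 - sumR d (fun j => x i j * dtheta j)) * r i ^ pred 2)).
       intros i Hi. apply is_derive_pow, is_derive_Rminus; [apply is_derive_Rconst|].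
       apply (sumR_derive d (fun t j => x i j * theta t j)). intros j Hj. now apply is_derive_Rscal, Hth. }
  transitivity (- (1 / INR n) * sumR d (fun j => sumR n (fun i => dtheta j * (r i * x i j)))).
  - rewrite <- sumR_swap.
    rewrite (sumR_ext n _ (fun i => -2 * sumR d (fun j => dtheta j * (r i * x i j)))).
    + rewrite sumR_scal. unfold Rdiv. generalize (/ INR n). intros c. field.
    + intros i Hi.
      rewrite (sumR_ext d (fun j => dtheta j * (r i * x i j)) (fun j => r i * (x i j * dtheta j))) by (intros; ring).
      rewrite sumR_scal. simpl. ring.
  - rewrite <- sumR_scal. apply sumR_ext. intros j Hj. rewrite sumR_scal. unfold gradL, r. ring.
Qed.

Lemma continuous_gradL (n d : nat) (x : nat -> nat -> R) (y : nat -> R) (theta : R -> nat -> R) (k : nat) (t0 : R) :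
  (forall j, (j < d)%nat -> continuous (fun t => theta t j) t0) ->
  continuous (fun t => gradL n d x y (theta t) k) t0.
Proof.
  intros Hth. unfold gradL. apply continuous_Rmult; [apply continuous_const|].
  apply (sumR_continuous n (fun t i => (y i - sumR d (fun j => x i j * theta t j)) * x i k)).
  intros i Hi. apply continuous_Rmult; [|apply continuous_const].
  apply continuous_Rminus; [apply continuous_const|].
  apply (sumR_continuous d (fun t j => x i j * theta t j)). intros j Hj.
  apply continuous_Rmult; [apply continuous_const|now apply Hth].
Qed.

Definition kinetic (d : nat) (du dv : R -> nat -> R) (t : R) : R :=
  sumR d (fun j => du t j ^ 2 + dv t j ^ 2).

Definition network_energy (n d : nat) (x : nat -> nat -> R) (y : nat -> R) (lam : R)
  (u v du dv : R -> nat -> R) (t : R) : R :=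
  loss n d x y (fun j => u t j * v t j) + lam / 2 * kinetic d du dv t.

Lemma network_energy_derive (n d : nat) (x : nat -> nat -> R) (y : nat -> R) (lam : R)
  (u v du dv ddu ddv : R -> nat -> R) (t : R) :
  (forall k, (k < d)%nat -> is_derive (fun s => u s k) t (du t k)) ->
  (forall k, (k < d)%nat -> is_derive (fun s => v s k) t (dv t k)) ->
  (forall k, (k < d)%nat -> is_derive (fun s => du s k) t (ddu t k)) ->
  (forall k, (k < d)%nat -> is_derive (fun s => dv s k) t (ddv t k)) ->
  (forall k, (k < d)%nat -> lam * ddu t k + du t k + gradL n d x y (fun j => u t j * v t j) k * v t k = 0) ->
  (forall k, (k < d)%nat -> lam * ddv t k + dv t k + gradL n d x y (fun j => u t j * v t j) k * u t k = 0) ->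
  is_derive (network_energy n d x y lam u v du dv) t (- kinetic d du dv t).
Proof.
  intros Hu Hv Hdu Hdv Hodeu Hodev. unfold network_energy, kinetic.
  eapply is_derive_value.
  2: { apply is_derive_Rplus.
       - apply (loss_derive n d x y (fun s j => u s j * v s j) (fun j => du t j * v t j + u t j * dv t j)).
         intros j Hj. now apply is_derive_Rmult; [apply Hu|apply Hv].
       - apply is_derive_Rscal.
         apply (sumR_derive d (fun s j => du s j ^ 2 + dv s j ^ 2)
           (fun j => INR 2 * ddu t j * du t j ^ pred 2 + INR 2 * ddv t j * dv t j ^ pred 2)).
         intros j Hj. apply is_derive_Rplus; apply is_derive_pow; [apply Hdu|apply Hdv]; auto. }
  rewrite <- sumR_scal, <- sumR_plus.
  replace (- sumR d (fun j => du t j ^ 2 + dv t j ^ 2)) with (sumR d (fun j => -1 * (du t j ^ 2 + dv t j ^ 2)))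
    by (rewrite sumR_scal; ring).
  apply sumR_ext. intros j Hj. specialize (Hodeu j Hj). specialize (Hodev j Hj).
  set (g := gradL n d x y (fun j => u t j * v t j) j) in *.
  transitivity (du t j * (lam * ddu t j + du t j + g * v t j) + dv t j * (lam * ddv t j + dv t j + g * u t j)
    - (du t j ^ 2 + dv t j ^ 2)); [simpl; field|].
  rewrite Hodeu, Hodev. ring.
Qed.

Lemma network_energy_nonneg (n d : nat) (x : nat -> nat -> R) (y : nat -> R) (lam : R)
  (u v du dv : R -> nat -> R) (t : R) : 0 < lam -> 0 <= network_energy n d x y lam u v du dv t.
Proof.
  intros Hl. unfold network_energy, kinetic. apply Rplus_le_le_0_compat; [apply loss_nonneg|].
  apply Rmult_le_pos; [lra|]. apply sumR_nonneg. intros. apply Rplus_le_le_0_compat; apply pow2_ge_0.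
Qed.

Lemma sqr_diff_factor (a b sigma : R) : (sigma = 1 \/ sigma = -1) ->
  a ^ 2 - b ^ 2 = (a + sigma * b) * (a - sigma * b).
Proof. intros [-> | ->]; ring. Qed.

Lemma sqr_plus_signed_le (a b sigma : R) : (sigma = 1 \/ sigma = -1) -> (a + sigma * b) ^ 2 <= 2 * (a ^ 2 + b ^ 2).
Proof. intros Hs. assert (0 <= (a - sigma * b) ^ 2) by apply pow2_ge_0. destruct Hs as [-> | ->]; nra. Qed.

(* [|a^2 - b^2| = |a + sigma b| |a - sigma b|] with the second factor bounded. *)
Lemma eventually_away_from_zero (a b : R -> R) (sigma M D : R) : (sigma = 1 \/ sigma = -1) ->
  (forall t, 0 <= t -> Rabs (a t) <= M /\ Rabs (b t) <= M) ->
  is_lim (fun t => Rabs (a t ^ 2 - b t ^ 2)) p_infty (Finite D) -> D <> 0 ->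
  exists T0 m, 0 < T0 /\ 0 < m /\ forall t, T0 <= t -> m <= Rabs (a t + sigma * b t).
Proof.
  intros Hs HM Hlim HD.
  assert (HDp : 0 < D).
  { destruct (Rtotal_order D 0) as [Lt|[Eq|Gt]]; auto; [|contradiction].
    destruct (lim_pinfty_eps_delta _ _ Hlim (- D)) as [M0 HM0]; [lra|].
    specialize (HM0 (M0 + 1) ltac:(lra)). apply Rabs_lt_between in HM0.
    assert (0 <= Rabs (a (M0 + 1) ^ 2 - b (M0 + 1) ^ 2)) by apply Rabs_pos. lra. }
  destruct (lim_pinfty_eps_delta _ _ Hlim (D / 2)) as [M0 HM0]; [lra|].
  assert (HMp : 0 < Rabs M + 1) by (assert (0 <= Rabs M) by apply Rabs_pos; lra).
  exists (Rmax 1 (M0 + 1)), (D / (4 * (Rabs M + 1))).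
  assert (HT : 1 <= Rmax 1 (M0 + 1) /\ M0 + 1 <= Rmax 1 (M0 + 1)) by (split; [apply Rmax_l|apply Rmax_r]).
  split; [lra|]. split; [apply Rdiv_lt_0_compat; lra|]. intros t Ht.
  specialize (HM0 t ltac:(lra)). apply Rabs_lt_between in HM0.
  destruct (HM t ltac:(lra)) as [Ma Mb].
  assert (Hb : Rabs (a t - sigma * b t) <= 2 * (Rabs M + 1)).
  { replace (a t - sigma * b t) with (a t + - (sigma * b t)) by ring.
    eapply Rle_trans; [apply Rabs_triang|]. rewrite Rabs_Ropp, Rabs_mult.
    assert (Rabs sigma = 1) as -> by (destruct Hs as [-> | ->]; unfold Rabs; destruct Rcase_abs; lra).
    assert (M <= Rabs M) by apply RRle_abs. lra. }
  rewrite (sqr_diff_factor _ _ sigma Hs), Rabs_mult in HM0.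
  assert (0 <= Rabs (a t + sigma * b t)) by apply Rabs_pos.
  apply (Rmult_le_reg_r (4 * (Rabs M + 1))); [lra|]. unfold Rdiv. rewrite Rmult_assoc, Rinv_l by lra. nra.
Qed.

Theorem lemma1
  (n d : nat) (x : nat -> nat -> R) (y : nat -> R) (lam : R)
  (u v du dv ddu ddv : R -> nat -> R)
  (Hlam : 0 < lam)
  (Hu1 : forall t k, 0 <= t -> (k < d)%nat -> is_derive (fun s => u s k) t (du t k))
  (Hv1 : forall t k, 0 <= t -> (k < d)%nat -> is_derive (fun s => v s k) t (dv t k))
  (Hu2 : forall t k, 0 <= t -> (k < d)%nat -> is_derive (fun s => du s k) t (ddu t k))
  (Hv2 : forall t k, 0 <= t -> (k < d)%nat -> is_derive (fun s => dv s k) t (ddv t k))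
  (Hodeu : forall t k, 0 <= t -> (k < d)%nat ->
     lam * ddu t k + du t k + gradL n d x y (fun j => u t j * v t j) k * v t k = 0)
  (Hodev : forall t k, 0 <= t -> (k < d)%nat ->
     lam * ddv t k + dv t k + gradL n d x y (fun j => u t j * v t j) k * u t k = 0)
  (Hdu0 : forall k, (k < d)%nat -> du 0 k = 0)
  (Hdv0 : forall k, (k < d)%nat -> dv 0 k = 0)
  (Hbal0 : forall k, (k < d)%nat -> Rabs (u 0 k ^ 2 - v 0 k ^ 2) <> 0)
  (Hbdd : exists M, forall t k, 0 <= t -> (k < d)%nat ->
     Rabs (u t k) <= M /\ Rabs (v t k) <= M)
  (Hbalinf : exists Dinf : nat -> R, forall k, (k < d)%nat ->
     is_lim (fun t => Rabs (u t k ^ 2 - v t k ^ 2)) p_infty (Finite (Dinf k)) /\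
     Dinf k <> 0) :
  forall k, (k < d)%nat -> forall sigma : R, (sigma = 1 \/ sigma = -1) ->
    Omega_well_defined_finite lam
      (fun t => u t k + sigma * v t k) (fun t => du t k + sigma * dv t k).
Proof.
  intros k Hk sigma Hsig.
  destruct Hbdd as [M HM]. destruct Hbalinf as [Dinf HD]. destruct (HD k Hk) as [Hlim HDk].
  destruct (eventually_away_from_zero (fun t => u t k) (fun t => v t k) sigma M (Dinf k) Hsig)
    as [T0 [m [HT0 [Hm HmT]]]]; auto.
  apply (Omega_well_defined_finite_of_dissipation lam _ _ (fun t => ddu t k + sigma * ddv t k)
    (fun t => sigma * gradL n d x y (fun j => u t j * v t j) k))
    with (T0 := T0) (m := m) (E := network_energy n d x y lam u v du dv) (Sd := kinetic d du dv); auto.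
  - intros t Ht. apply is_derive_Rplus; [|apply is_derive_Rscal]; auto.
  - intros t Ht. apply is_derive_Rplus; [|apply is_derive_Rscal]; auto.
  - intros t Ht. specialize (Hodeu t k Ht Hk). specialize (Hodev t k Ht Hk).
    destruct Hsig as [-> | ->]; lra.
  - intros t Ht. apply continuous_Rmult; [apply continuous_const|]. apply continuous_gradL.
    intros j Hj. apply continuous_Rmult; eapply is_derive_continuous; [apply Hu1|apply Hv1]; auto.
  - intros E0. apply (Hbal0 k Hk). rewrite (sqr_diff_factor _ _ sigma Hsig), E0, Rmult_0_l. apply Rabs_R0.
  - intros t Ht. apply (network_energy_derive n d x y lam u v du dv ddu ddv); auto.
  - intros t Ht. now apply network_energy_nonneg.
  - intros t Ht. unfold kinetic. eapply Rle_trans; [apply sqr_plus_signed_le, Hsig|].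
    apply Rmult_le_compat_l; [lra|]. apply (sumR_ge_term d k (fun j => du t j ^ 2 + dv t j ^ 2)); auto.
    intros; apply Rplus_le_le_0_compat; apply pow2_ge_0.
Qed.
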